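(* Let $G$ be a group and $N$ a normal subgroup of $G$. Assume that $\mathrm{Q}(N)^G/\mathrm{H}^1(N)^G$ is finite dimensional and set $\ell=\dim_{\mathbb{R}}(\mathrm{Q}(N)^G/\mathrm{H}^1(N)^G)$. Then $([G,N],d_{\mathrm{scl}_{G,N}})$ is isomorphic to $(\mathbb{Z}^\ell,\|\cdot\|_1)$ as a coarse group; that is, there exist pre-coarse homomorphisms $\sigma\colon[G,N]\to\mathbb{Z}^\ell$ and $\tau\colon\mathbb{Z}^\ell\to[G,N]$ which are controlled (for $d_{\mathrm{scl}_{G,N}}$ and $\|\cdot\|_1$) and coarse inverse to each other; moreover this coarse isomorphism may be given by a quasi-isometry.
   Context: $[g,x]=gxg^{-1}x^{-1}$; $[G,N]$ is generated by $[g,x]$, $g\in G$, $x\in N$; $\mathrm{cl}_{G,N}$ is word length in $[G,N]$ with respect to these simple commutators; $\mathrm{scl}_{G,N}(y)=\lim_{n}\mathrm{cl}_{G,N}(y^n)/n$; $d_{\mathrm{scl}_{G,N}}(y_1,y_2)=\mathrm{scl}_{G,N}(y_1^{-1}y_2)$ on $[G,N]$. $\mathrm{Q}(N)^G$ is the space of homogeneous ($\psi(x^n)=n\psi(x)$) quasimorphisms ($\sup|\psi(x_1x_2)-\psi(x_1)-\psi(x_2)|<\infty$) on $N$ invariant under conjugation by $G$, and $\mathrm{H}^1(N)^G\subseteq\mathrm{Q}(N)^G$ the $G$-invariant homomorphisms $N\to\mathbb{R}$. $\mathbb{Z}^0=\{0\}$. A pre-coarse homomorphism $\alpha$ of groups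 with functions $d$ satisfies $\sup d(\alpha(gg'),\alpha(g)\alpha(g'))<\infty$; controlled means bounded distances map to uniformly bounded distances; coarse inverse means both compositions are within bounded distance of the identity maps; a quasi-isometry is a map $\alpha$ with $C_1d-D_1\le d'(\alpha\cdot,\alpha\cdot)\le C_2d+D_2$ admitting a coarse inverse with the same property. *)

From Stdlib Require Import Reals ZArith Arith ClassicalEpsilon.
From Coquelicot Require Import Coquelicot.
Open Scope R_scope.
Set Implicit Arguments.

Section GroupDefs.
Variables (T : Type) (mul : T -> T -> T) (inv : T -> T) (e : T).

Record is_group : Prop := {
  g_assoc : forall x y z, mul x (mul y z) = mul (mul x y) z;
  g_id_l : forall x, mul e x = x;
  g_id_r : forall x, mul x e = x;
  g_inv_l : forall x, mul (inv x) x = e;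
  g_inv_r : forall x, mul x (inv x) = e }.

(* N is a normal subgroup of G (= the whole carrier T). *)
Record is_normal_subgroup (N : T -> Prop) : Prop := {
  ns_one : N e;
  ns_mul : forall x y, N x -> N y -> N (mul x y);
  ns_inv : forall x, N x -> N (inv x);
  ns_conj : forall g x, N x -> N (mul (mul g x) (inv g)) }.

Fixpoint gpow (x : T) (n : nat) : T :=
  match n with O => e | S m => mul x (gpow x m) end.

Definition comm (g x : T) : T := mul (mul (mul g x) (inv g)) (inv x).

Fixpoint prod_comm (N : T -> Prop) (y : T) (n : nat) : Prop :=
  match n with
  | O => y = e
  | S m => exists g x z, N x /\ prod_comm N z m /\ y = mul (comm g x) z
  end.

Definition in_GN (N : T -> Prop) (y : T) : Prop := exists n, prod_comm N y n.

(* cl_{G,N}(y): the least number of simple commutators whose product is y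
   (junk value outside [G,N]). *)
Definition cl (N : T -> Prop) (y : T) : nat :=
  epsilon (inhabits 0%nat)
    (fun n => prod_comm N y n /\ forall m, prod_comm N y m -> (n <= m)%nat).

Definition scl (N : T -> Prop) (y : T) : R :=
  real (Lim_seq (fun n => INR (cl N (gpow y n)) / INR n)).

Definition dscl (N : T -> Prop) (y1 y2 : T) : R := scl N (mul (inv y1) y2).

(* Q(N)^G : G-invariant homogeneous quasimorphisms on N
   (functions T -> R, only their values on N matter). *)
Definition is_Q_inv (N : T -> Prop) (psi : T -> R) : Prop :=
  (forall x (n : nat), N x -> psi (gpow x n) = INR n * psi x) /\
  (exists D, forall x1 x2, N x1 -> N x2 ->
       Rabs (psi (mul x1 x2) - psi x1 - psi x2) <= D) /\
  (forall g x, N x -> psi (mul (mul g x) (inv g)) = psi x).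

Definition is_H1_inv (N : T -> Prop) (h : T -> R) : Prop :=
  (forall x1 x2, N x1 -> N x2 -> h (mul x1 x2) = h x1 + h x2) /\
  (forall g x, N x -> h (mul (mul g x) (inv g)) = h x).

End GroupDefs.

Fixpoint rsum (f : nat -> R) (n : nat) : R :=
  match n with O => 0 | S m => rsum f m + f m end.

(* dim_R (Q(N)^G / H^1(N)^G) = l : there are psi_0,...,psi_{l-1} in Q(N)^G
   whose classes form a basis of the quotient space (functions on N). *)
Definition quot_dim_eq (T : Type) (mul : T -> T -> T) (inv : T -> T) (e : T)
    (N : T -> Prop) (l : nat) : Prop :=
  exists psi : nat -> T -> R,
    (forall i, (i < l)%nat -> is_Q_inv mul inv e N (psi i)) /\
    (forall phi, is_Q_inv mul inv e N phi ->
       exists (c : nat -> R) (h : T -> R), is_H1_inv mul inv N h /\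
         forall x, N x -> phi x = rsum (fun i => c i * psi i x) l + h x) /\
    (forall c : nat -> R,
       (exists h : T -> R, is_H1_inv mul inv N h /\
          forall x, N x -> h x = rsum (fun i => c i * psi i x) l) ->
       forall i, (i < l)%nat -> c i = 0).

Definition Zl (l : nat) : Type := {v : nat -> Z | forall i, (l <= i)%nat -> v i = 0%Z}.

Definition Zl_add {l : nat} (v w : Zl l) : Zl l.
Proof.
  refine (exist _ (fun i => (proj1_sig v i + proj1_sig w i)%Z) _).
  intros i Hi. rewrite (proj2_sig v i Hi), (proj2_sig w i Hi). reflexivity.
Defined.

Fixpoint zsum (f : nat -> Z) (n : nat) : Z :=
  match n with O => 0%Z | S m => (zsum f m + f m)%Z end.

Definition dist1 {l : nat} (v w : Zl l) : R :=
  IZR (zsum (fun i => Z.abs (proj1_sig w i - proj1_sig v i)) l).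

(* Bavard duality for [scl_{G,N}]: the stable cost of filling an integral chain on [N]
   by conjugated powers and commutators is a subadditive functional on the free abelian
   group [T -> Z], and Hahn-Banach turns its value at [z] into a G-invariant homogeneous
   quasimorphism [phi] of defect 1 with [scl z <= phi z]; conversely [|psi y| <= 2 D scl y]
   for [psi] of defect [D].  Gaussian elimination gives [psi_1, ..., psi_l] spanning
   [Q(N)^G] freely modulo [H^1(N)^G] together with [z_1, ..., z_l] in [[G,N]] such that
   [psi_i (z_j) = delta_ij] (a quasimorphism vanishing on [[G,N]] is a homomorphism).
   Homomorphisms vanish on [[G,N]], so there Bavard's [phi] equals [sum_i phi (z_i) psi_i],
   and [d_scl] is bi-Lipschitz, up to additive constants, to the l1 distance of the
   coordinates [(psi_i)_i].  Rounding the coordinates gives [sigma], and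
   [tau v = prod_j z_j^(v_j)]. *)

From Pilot Require Import Defs.
From Stdlib Require Import Reals.
From Coquelicot Require Import Coquelicot.
Open Scope R_scope.
From Stdlib Require Import ZArith Lia Lra List ClassicalEpsilon FunctionalExtensionality.
From mathcomp Require boolp classical_sets.
Set Implicit Arguments.
Unset Strict Implicit.

(** * Hahn-Banach for integer-valued functions *)

Lemma zorn_premaximal (E : Type) (t0 : E) (Rp : E -> E -> Prop) :
  (forall t, Rp t t) -> (forall r s t, Rp r s -> Rp s t -> Rp r t) ->
  (forall A : E -> Prop, (forall s t, A s -> A t -> Rp s t \/ Rp t s) ->
     exists t, forall s, A s -> Rp s t) ->
  exists t, forall s, Rp t s -> Rp s t.
Proof.
  intros Hrefl Htrans Hchain.
  set (Rb := fun s t => boolp.asbool (Rp s t)).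
  assert (HR : forall s t, is_true (Rb s t) <-> Rp s t).
  { intros. split; [apply boolp.asboolW | apply boolp.asboolT]. }
  destruct (@classical_sets.ZL_preorder E t0 Rb) as [t Ht].
  - intro s. now apply HR.
  - intros r s t Hrs Hst. apply HR. apply HR in Hrs, Hst. eauto.
  - intros A Htot. destruct (Hchain A) as [t Ht].
    + intros s t Hs Ht. destruct (Htot s t Hs Ht) as [H|H]; [left|right]; now apply HR.
    + exists t. intros s Hs. apply HR. auto.
  - exists t. intros s Hs. apply HR, Ht, HR, Hs.
Qed.

Definition vadd {X : Type} (a b : X -> Z) : X -> Z := fun x => (a x + b x)%Z.
Definition vopp {X : Type} (a : X -> Z) : X -> Z := fun x => (- a x)%Z.
Definition vzero {X : Type} : X -> Z := fun _ => 0%Z.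
Definition vscal {X : Type} (n : Z) (a : X -> Z) : X -> Z := fun x => (n * a x)%Z.

Ltac vext := apply functional_extensionality; intro;
  unfold vadd, vopp, vzero, vscal; lia.

Section ZHahnBanach.
Variable X : Type.

(* [P a r] reads "a can be realized at cost at most r". *)
Variable P : (X -> Z) -> R -> Prop.
Hypothesis P_zero : P vzero 0.
Hypothesis P_zero_ge0 : forall r, P vzero r -> 0 <= r.
Hypothesis P_add : forall a b r s, P a r -> P b s -> P (vadd a b) (r + s).
Hypothesis P_opp : forall a r, P a r -> exists s, P (vopp a) s.

Lemma P_scal a r n : P a r -> P (vscal (Z.of_nat n) a) (INR n * r).
Proof.
  intro H. induction n as [|n IH].
  - replace (vscal (Z.of_nat 0) a) with (@vzero X) by vext. now rewrite Rmult_0_l.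
  - replace (vscal (Z.of_nat (S n)) a) with (vadd (vscal (Z.of_nat n) a) a) by vext.
    rewrite S_INR, Rmult_plus_distr_r, Rmult_1_l. now apply P_add.
Qed.

Definition dominated (W : (X -> Z) -> Prop) (f : (X -> Z) -> R) : Prop :=
  W vzero /\ (forall a b, W a -> W b -> W (vadd a b)) /\ (forall a, W a -> W (vopp a)) /\
  (forall a b, W a -> W b -> f (vadd a b) = f a + f b) /\ (forall a r, W a -> P a r -> f a <= r).

Section Extension.
Variables (W : (X -> Z) -> Prop) (f : (X -> Z) -> R).
Hypothesis Hdom : dominated W f.
Variable v : X -> Z.

Lemma dom_zero : W vzero. Proof. apply Hdom. Qed.
Lemma dom_add a b : W a -> W b -> W (vadd a b). Proof. apply Hdom. Qed.
Lemma dom_opp a : W a -> W (vopp a). Proof. apply Hdom. Qed.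
Lemma dom_fadd a b : W a -> W b -> f (vadd a b) = f a + f b. Proof. apply Hdom. Qed.
Lemma dom_le a r : W a -> P a r -> f a <= r. Proof. apply Hdom. Qed.

Lemma dom_f0 : f vzero = 0.
Proof.
  pose proof (dom_fadd dom_zero dom_zero) as H.
  replace (vadd vzero vzero) with (@vzero X) in H by vext. lra.
Qed.
Lemma dom_fopp a : W a -> f (vopp a) = - f a.
Proof.
  intro Ha. pose proof (dom_fadd Ha (dom_opp Ha)) as H.
  replace (vadd a (vopp a)) with (@vzero X) in H by vext. rewrite dom_f0 in H. lra.
Qed.
Lemma dom_scal a n : W a -> W (vscal (Z.of_nat n) a) /\ f (vscal (Z.of_nat n) a) = INR n * f a.
Proof.
  intro Ha. induction n as [|n [IH1 IH2]].
  - replace (vscal (Z.of_nat 0) a) with (@vzero X) by vext.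
    split; [apply dom_zero | rewrite dom_f0; simpl; ring].
  - replace (vscal (Z.of_nat (S n)) a) with (vadd (vscal (Z.of_nat n) a) a) by vext.
    split; [now apply dom_add | rewrite dom_fadd, IH2, S_INR by auto; ring].
Qed.

(* The admissible values [c] of the extension at [v] lie between [sup lower_bd]
   and [inf upper_bd]. *)
Definition lower_bd (x : R) : Prop := exists w m r, W w /\ (1 <= m)%nat /\
  P (vadd w (vscal (- Z.of_nat m) v)) r /\ x = (f w - r) / INR m.
Definition upper_bd (x : R) : Prop := exists w n r, W w /\ (1 <= n)%nat /\
  P (vadd w (vscal (Z.of_nat n) v)) r /\ x = (r - f w) / INR n.

Lemma lower_le_upper a b : lower_bd a -> upper_bd b -> a <= b.
Proof.
  intros [w1 [m [r1 [Hw1 [Hm [HP1 ->]]]]]] [w2 [n [r2 [Hw2 [Hn [HP2 ->]]]]]].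
  pose proof (P_add (P_scal n HP1) (P_scal m HP2)) as HP3.
  replace (vadd (vscal (Z.of_nat n) (vadd w1 (vscal (- Z.of_nat m) v)))
                (vscal (Z.of_nat m) (vadd w2 (vscal (Z.of_nat n) v))))
    with (vadd (vscal (Z.of_nat n) w1) (vscal (Z.of_nat m) w2)) in HP3 by vext.
  destruct (dom_scal n Hw1) as [Ha1 Hb1]. destruct (dom_scal m Hw2) as [Ha2 Hb2].
  pose proof (dom_le (dom_add Ha1 Ha2) HP3) as H. rewrite dom_fadd, Hb1, Hb2 in H by auto.
  assert (0 < INR n) by (apply lt_0_INR; lia). assert (0 < INR m) by (apply lt_0_INR; lia).
  unfold Rdiv. apply Rmult_le_reg_r with (INR m * INR n); [nra|].
  replace ((f w1 - r1) * / INR m * (INR m * INR n)) with (INR n * (f w1 - r1)) by (field; lra).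
  replace ((r2 - f w2) * / INR n * (INR m * INR n)) with (INR m * (r2 - f w2)) by (field; lra).
  lra.
Qed.

Lemma upper_bd_inhabited : (exists a, lower_bd a) -> exists b, upper_bd b.
Proof.
  intros [a [w [m [r [Hw [Hm [HPa _]]]]]]]. destruct (P_opp HPa) as [s Hs].
  exists ((s - f (vopp w)) / INR m), (vopp w), m, s. repeat split; auto; [now apply dom_opp|].
  now replace (vadd (vopp w) (vscal (Z.of_nat m) v))
    with (vopp (vadd w (vscal (- Z.of_nat m) v))) by vext.
Qed.

Lemma lower_bd_inhabited : (exists b, upper_bd b) -> exists a, lower_bd a.
Proof.
  intros [b [w [n [r [Hw [Hn [HPb _]]]]]]]. destruct (P_opp HPb) as [s Hs].
  exists ((f (vopp w) - s) / INR n), (vopp w), n, s. repeat split; auto; [now apply dom_opp|].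
  now replace (vadd (vopp w) (vscal (- Z.of_nat n) v))
    with (vopp (vadd w (vscal (Z.of_nat n) v))) by vext.
Qed.

Lemma extension_value : exists c,
  (forall a, lower_bd a -> a <= c) /\ (forall b, upper_bd b -> c <= b) /\
  ((exists b, upper_bd b) -> forall L, (forall b, upper_bd b -> L <= b) -> L <= c).
Proof.
  destruct (classic (exists b, upper_bd b)) as [HB|HB].
  - set (E := fun x => upper_bd (- x)).
    assert (Hb : bound E).
    { destruct (lower_bd_inhabited HB) as [a Ha]. exists (- a). intros x Hx.
      pose proof (lower_le_upper Ha Hx). lra. }
    assert (Hne : exists x, E x).
    { destruct HB as [b Hb']. exists (- b). unfold E. now rewrite Ropp_involutive. }
    destruct (completeness E Hb Hne) as [m [Hm1 Hm2]].
    exists (- m). repeat split.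
    + intros a Ha. enough (m <= - a) by lra. apply Hm2. intros x Hx.
      pose proof (lower_le_upper Ha Hx). lra.
    + intros b Hb'. enough (- b <= m) by lra. apply Hm1. unfold E. now rewrite Ropp_involutive.
    + intros _ L HL. enough (m <= - L) by lra. apply Hm2. intros x Hx. pose proof (HL _ Hx). lra.
  - exists 0. repeat split.
    + intros a Ha. exfalso. apply HB, upper_bd_inhabited. now exists a.
    + intros b Hb. exfalso. apply HB. now exists b.
    + intros H. contradiction.
Qed.

Definition ext_dom (u : X -> Z) : Prop := exists w n, W w /\ u = vadd w (vscal n v).

Section WithValue.
Variable c : R.
Hypothesis Hlow : forall a, lower_bd a -> a <= c.
Hypothesis Hupp : forall b, upper_bd b -> c <= b.

Lemma value_on_multiple k : (1 <= k)%nat -> W (vscal (Z.of_nat k) v) ->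
  f (vscal (Z.of_nat k) v) = INR k * c.
Proof.
  intros Hk Hw. assert (Hk0 : 0 < INR k) by (apply lt_0_INR; lia).
  assert (H1 : c <= (0 - f (vopp (vscal (Z.of_nat k) v))) / INR k).
  { apply Hupp. exists (vopp (vscal (Z.of_nat k) v)), k, 0. repeat split; auto.
    - now apply dom_opp.
    - now replace (vadd (vopp (vscal (Z.of_nat k) v)) (vscal (Z.of_nat k) v)) with (@vzero X) by vext. }
  assert (H2 : (f (vscal (Z.of_nat k) v) - 0) / INR k <= c).
  { apply Hlow. exists (vscal (Z.of_nat k) v), k, 0. repeat split; auto.
    now replace (vadd (vscal (Z.of_nat k) v) (vscal (- Z.of_nat k) v)) with (@vzero X) by vext. }
  rewrite dom_fopp in H1 by auto.
  apply Rmult_le_compat_r with (r := INR k) in H1, H2; try lra.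
  replace ((0 - - f (vscal (Z.of_nat k) v)) / INR k * INR k) with (f (vscal (Z.of_nat k) v))
    in H1 by (field; lra).
  replace ((f (vscal (Z.of_nat k) v) - 0) / INR k * INR k) with (f (vscal (Z.of_nat k) v))
    in H2 by (field; lra).
  lra.
Qed.

Lemma value_on_zmultiple d : W (vscal d v) -> f (vscal d v) = IZR d * c.
Proof.
  intro Hw. destruct (Z.lt_trichotomy d 0) as [Hd|[Hd|Hd]].
  - set (k := Z.to_nat (- d)).
    assert (E : vscal d v = vopp (vscal (Z.of_nat k) v)) by (unfold k; vext).
    rewrite E in *.
    assert (W (vscal (Z.of_nat k) v)).
    { replace (vscal (Z.of_nat k) v) with (vopp (vopp (vscal (Z.of_nat k) v))) by vext.
      now apply dom_opp. }
    rewrite dom_fopp, value_on_multiple by (auto; unfold k; lia).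
    replace d with (- Z.of_nat k)%Z by (unfold k; lia). rewrite opp_IZR, <- INR_IZR_INZ. ring.
  - subst. replace (vscal 0 v) with (@vzero X) by vext. rewrite dom_f0. simpl. ring.
  - set (k := Z.to_nat d). replace d with (Z.of_nat k) in * by (unfold k; lia).
    rewrite value_on_multiple by (auto; unfold k; lia). now rewrite <- INR_IZR_INZ.
Qed.

Definition ext_fun (u : X -> Z) : R :=
  let wn := epsilon (inhabits (vzero, 0%Z))
              (fun wn => W (fst wn) /\ u = vadd (fst wn) (vscal (snd wn) v)) in
  f (fst wn) + IZR (snd wn) * c.

Lemma ext_fun_val w n : W w -> ext_fun (vadd w (vscal n v)) = f w + IZR n * c.
Proof.
  intro Hw. unfold ext_fun.
  destruct (epsilon_spec (inhabits (vzero, 0%Z))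
    (fun wn => W (fst wn) /\ vadd w (vscal n v) = vadd (fst wn) (vscal (snd wn) v))
    (ex_intro _ (w, n) (conj Hw eq_refl))) as [H1 E].
  set (wn := epsilon _ _) in *. destruct wn as [w' n']. simpl in *.
  assert (E2 : vadd w (vopp w') = vscal (n' - n) v).
  { apply functional_extensionality; intro x. pose proof (f_equal (fun g => g x) E).
    unfold vadd, vscal, vopp in *. lia. }
  assert (Hw' : W (vscal (n' - n) v)) by (rewrite <- E2; apply dom_add; auto; now apply dom_opp).
  pose proof (value_on_zmultiple Hw') as Hc.
  rewrite <- E2, dom_fadd, dom_fopp, minus_IZR in Hc by (auto; now apply dom_opp). lra.
Qed.

Lemma ext_fun_le a r : ext_dom a -> P a r -> ext_fun a <= r.
Proof.
  intros [w [n [Hw ->]]] HPa. rewrite ext_fun_val by auto.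
  destruct (Z.lt_trichotomy n 0) as [Hn|[Hn|Hn]].
  - set (k := Z.to_nat (- n)). replace n with (- Z.of_nat k)%Z in * by (unfold k; lia).
    assert (Hk : 0 < INR k) by (apply lt_0_INR; unfold k; lia).
    assert (Hle : (f w - r) / INR k <= c)
      by (apply Hlow; exists w, k, r; unfold k; repeat split; auto; lia).
    rewrite opp_IZR, <- INR_IZR_INZ.
    apply Rmult_le_compat_r with (r := INR k) in Hle; [|lra].
    replace ((f w - r) / INR k * INR k) with (f w - r) in Hle by (field; lra). nra.
  - subst. replace (vadd w (vscal 0 v)) with w in HPa by vext.
    rewrite Rmult_0_l, Rplus_0_r. now apply dom_le.
  - set (k := Z.to_nat n). replace n with (Z.of_nat k) in * by (unfold k; lia).
    assert (Hk : 0 < INR k) by (apply lt_0_INR; unfold k; lia).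
    assert (Hle : c <= (r - f w) / INR k)
      by (apply Hupp; exists w, k, r; unfold k; repeat split; auto; lia).
    rewrite <- INR_IZR_INZ.
    apply Rmult_le_compat_r with (r := INR k) in Hle; [|lra].
    replace ((r - f w) / INR k * INR k) with (r - f w) in Hle by (field; lra). nra.
Qed.

Lemma ext_dominated : dominated ext_dom ext_fun.
Proof.
  repeat split.
  - exists vzero, 0%Z. split; [apply dom_zero | vext].
  - intros a b [w1 [n1 [H1 ->]]] [w2 [n2 [H2 ->]]]. exists (vadd w1 w2), (n1 + n2)%Z.
    split; [now apply dom_add | vext].
  - intros a [w [n [H ->]]]. exists (vopp w), (- n)%Z. split; [now apply dom_opp | vext].
  - intros a b [w1 [n1 [H1 ->]]] [w2 [n2 [H2 ->]]].
    replace (vadd (vadd w1 (vscal n1 v)) (vadd w2 (vscal n2 v)))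
      with (vadd (vadd w1 w2) (vscal (n1 + n2) v)) by vext.
    rewrite !ext_fun_val, dom_fadd, plus_IZR by (auto; now apply dom_add). ring.
  - apply ext_fun_le.
Qed.

Lemma ext_extends a : W a -> ext_dom a /\ ext_fun a = f a.
Proof.
  intro Ha. assert (E : a = vadd a (vscal 0 v)) by vext. split.
  - now exists a, 0%Z.
  - rewrite E at 1. rewrite ext_fun_val by auto. simpl. ring.
Qed.

Lemma ext_dom_v : ext_dom v.
Proof. exists vzero, 1%Z. split; [apply dom_zero | vext]. Qed.

Lemma ext_fun_v : ext_fun v = c.
Proof.
  replace v with (vadd vzero (vscal 1 v)) at 1 by vext.
  rewrite ext_fun_val by apply dom_zero. rewrite dom_f0. simpl. ring.
Qed.

End WithValue.

Lemma dominated_extend : exists W' f', dominated W' f' /\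
  (forall a, W a -> W' a /\ f' a = f a) /\ W' v /\
  ((exists b, upper_bd b) -> forall L, (forall b, upper_bd b -> L <= b) -> L <= f' v).
Proof.
  destruct extension_value as [c [Hl [Hu HL]]].
  exists ext_dom, (ext_fun c). split; [|split; [|split]].
  - now apply ext_dominated.
  - intros a Ha. now apply ext_extends.
  - apply ext_dom_v.
  - rewrite ext_fun_v; auto.
Qed.

End Extension.

Definition extends (W W' : (X -> Z) -> Prop) (f f' : (X -> Z) -> R) : Prop :=
  forall a, W a -> W' a /\ f' a = f a.

Lemma dominated_chain_union (I : Type) (i0 : I) (Ws : I -> (X -> Z) -> Prop)
    (fs : I -> (X -> Z) -> R) :
  (forall i, dominated (Ws i) (fs i)) ->
  (forall i j, extends (Ws i) (Ws j) (fs i) (fs j) \/ extends (Ws j) (Ws i) (fs j) (fs i)) ->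
  exists WU fU, dominated WU fU /\ forall i, extends (Ws i) WU (fs i) fU.
Proof.
  intros Hdom Hcmp.
  set (WU := fun a => exists i, Ws i a).
  set (fU := fun a => fs (epsilon (inhabits i0) (fun i => Ws i a)) a).
  assert (fU_val : forall i a, Ws i a -> fU a = fs i a).
  { intros i a Ha. unfold fU.
    pose proof (epsilon_spec (inhabits i0) (fun i => Ws i a) (ex_intro _ i Ha)) as Hj.
    set (j := epsilon _ _) in *.
    destruct (Hcmp i j) as [C|C]; [apply (C a Ha) | symmetry; apply (C a Hj)]. }
  assert (Hjoin : forall a b, WU a -> WU b -> exists i, Ws i a /\ Ws i b).
  { intros a b [i Ha] [j Hb]. destruct (Hcmp i j) as [C|C].
    - exists j. split; [apply (C a Ha) | exact Hb].
    - exists i. split; [exact Ha | apply (C b Hb)]. }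
  exists WU, fU. split.
  - repeat split.
    + exists i0. apply (Hdom i0).
    + intros a b Ha Hb. destruct (Hjoin a b Ha Hb) as [i [Ha' Hb']].
      exists i. now apply (dom_add (Hdom i)).
    + intros a [i Ha]. exists i. now apply (dom_opp (Hdom i)).
    + intros a b Ha Hb. destruct (Hjoin a b Ha Hb) as [i [Ha' Hb']].
      rewrite (fU_val i (vadd a b)), (fU_val i a), (fU_val i b) by (auto; now apply (dom_add (Hdom i))).
      now apply (dom_fadd (Hdom i)).
    + intros a r [i Ha] HPa. rewrite (fU_val i a) by auto. now apply (dom_le (Hdom i)).
  - intros i a Ha. split; [now exists i | now apply fU_val].
Qed.

Lemma dominated_total_extension W f : dominated W f ->
  exists F, (forall a b, F (vadd a b) = F a + F b) /\ (forall a r, P a r -> F a <= r) /\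
    forall a, W a -> F a = f a.
Proof.
  intro Hdom.
  set (E := {p : ((X -> Z) -> Prop) * ((X -> Z) -> R) |
              dominated (fst p) (snd p) /\ extends W (fst p) f (snd p)}).
  set (Ext := fun s t : E => extends (fst (proj1_sig s)) (fst (proj1_sig t))
                                     (snd (proj1_sig s)) (snd (proj1_sig t))).
  assert (Hrefl : forall s, Ext s s) by (intros s a Ha; now split).
  assert (Htrans : forall r s t, Ext r s -> Ext s t -> Ext r t).
  { intros r s t Hrs Hst a Ha. destruct (Hrs a Ha) as [H1 H2]. destruct (Hst a H1) as [H3 H4].
    split; [exact H3 | congruence]. }
  set (t0 := exist _ (W, f) (conj Hdom (fun a Ha => conj Ha eq_refl)) : E).
  destruct (@zorn_premaximal E t0 Ext Hrefl Htrans) as [t Hmax].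
  - intros A Hchain.
    destruct (classic (exists s, A s)) as [[s0 Hs0]|Hne].
    2:{ exists t0. intros s Hs. exfalso. eauto. }
    destruct (@dominated_chain_union {s : E | A s} (exist _ s0 Hs0)
      (fun i => fst (proj1_sig (proj1_sig i))) (fun i => snd (proj1_sig (proj1_sig i))))
      as [WU [fU [HdU HU]]].
    + intro i. exact (proj1 (proj2_sig (proj1_sig i))).
    + intros [s Hs] [s' Hs']. exact (Hchain s s' Hs Hs').
    + assert (HW : extends W WU f fU).
      { intros a Ha. destruct (proj2 (proj2_sig s0) a Ha) as [H1 H2].
        destruct (HU (exist _ s0 Hs0) a H1) as [H3 H4]. simpl in H4. split; congruence. }
      exists (exist _ (WU, fU) (conj HdU HW)). intros s Hs. apply (HU (exist _ s Hs)).
  - destruct t as [[Wt ft] [Hdt Het]]. simpl in *.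
    assert (Hall : forall a, Wt a).
    { intro a. destruct (dominated_extend Hdt a) as [W' [f' [Hd' [Hext [Ha _]]]]].
      assert (HW' : extends W W' f f').
      { intros b Hb. destruct (Het b Hb) as [H1 H2]. destruct (Hext b H1) as [H3 H4].
        split; [exact H3 | congruence]. }
      apply (Hmax (exist _ (W', f') (conj Hd' HW')) Hext a Ha). }
    exists ft. repeat split.
    + intros a b. apply Hdt; apply Hall.
    + intros a r. apply Hdt, Hall.
    + intros a Ha. apply Het, Ha.
Qed.

Theorem Z_hahn_banach (v0 : X -> Z) (L : R) :
  (exists r, P v0 r) ->
  (forall n r, (1 <= n)%nat -> P (vscal (Z.of_nat n) v0) r -> INR n * L <= r) ->
  exists F, (forall a b, F (vadd a b) = F a + F b) /\ (forall a r, P a r -> F a <= r) /\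
    L <= F v0.
Proof.
  intros [r0 Hr0] HL.
  set (W0 := fun a => a = @vzero X). set (f0 := fun _ : X -> Z => 0).
  assert (Hd0 : dominated W0 f0).
  { unfold W0, f0. repeat split; auto.
    - intros a b -> ->. vext.
    - intros a ->. vext.
    - intros. ring.
    - intros a r -> H. now apply P_zero_ge0. }
  destruct (dominated_extend Hd0 v0) as [W1 [f1 [Hd1 [_ [Hv0 HL1]]]]].
  destruct (dominated_total_extension Hd1) as [F [Fadd [Fle Fext]]].
  exists F. repeat split; auto. rewrite Fext by exact Hv0. apply HL1.
  - exists (r0 - f0 vzero), vzero, 1%nat, r0. repeat split; [lia | |].
    + now replace (vadd vzero (vscal (Z.of_nat 1) v0)) with v0 by vext.
    + simpl. unfold f0. field.
  - intros b [w [n [r [Hw [Hn [HP ->]]]]]]. unfold W0 in Hw. subst w.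
    replace (vadd vzero (vscal (Z.of_nat n) v0)) with (vscal (Z.of_nat n) v0) in HP by vext.
    pose proof (HL n r Hn HP). assert (0 < INR n) by (apply lt_0_INR; lia).
    unfold f0. apply Rmult_le_reg_r with (INR n); auto.
    replace ((r - 0) / INR n * INR n) with r by (field; lra). lra.
Qed.

End ZHahnBanach.

Lemma rsum_ext f g n : (forall i, (i < n)%nat -> f i = g i) -> rsum f n = rsum g n.
Proof. induction n as [|n IH]; intro H; simpl; auto. rewrite IH, H; auto. Qed.
Lemma rsum_plus f g n : rsum (fun i => f i + g i) n = rsum f n + rsum g n.
Proof. induction n as [|n IH]; simpl; [ring | rewrite IH; ring]. Qed.
Lemma rsum_minus f g n : rsum (fun i => f i - g i) n = rsum f n - rsum g n.
Proof. induction n as [|n IH]; simpl; [ring | rewrite IH; ring]. Qed.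
Lemma rsum_scal a f n : rsum (fun i => a * f i) n = a * rsum f n.
Proof. induction n as [|n IH]; simpl; [ring | rewrite IH; ring]. Qed.
Lemma rsum_const c n : rsum (fun _ => c) n = INR n * c.
Proof. induction n as [|n IH]; simpl; [ring | rewrite IH; destruct n; simpl; ring]. Qed.
Lemma rsum_le f g n : (forall i, (i < n)%nat -> f i <= g i) -> rsum f n <= rsum g n.
Proof.
  induction n as [|n IH]; intro H; simpl; [lra|].
  pose proof (H n ltac:(lia)). pose proof (IH (fun i Hi => H i ltac:(lia))). lra.
Qed.
Lemma rsum_ge0 f n : (forall i, (i < n)%nat -> 0 <= f i) -> 0 <= rsum f n.
Proof. intro H. rewrite <- (Rmult_0_r (INR n)), <- rsum_const. now apply rsum_le. Qed.
Lemma rsum_abs f n : Rabs (rsum f n) <= rsum (fun i => Rabs (f i)) n.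
Proof.
  induction n as [|n IH]; simpl; [rewrite Rabs_R0; lra|].
  eapply Rle_trans; [apply Rabs_triang | lra].
Qed.
Lemma rsum_dist f g n c : (forall i, (i < n)%nat -> Rabs (f i - g i) <= c) ->
  Rabs (rsum f n - rsum g n) <= INR n * c.
Proof.
  intro H. rewrite <- rsum_minus, <- rsum_const.
  eapply Rle_trans; [apply rsum_abs | now apply rsum_le].
Qed.

Lemma rsum_split f n k : (k < n)%nat ->
  rsum f n = rsum (fun i => if Nat.eqb i k then 0 else f i) n + f k.
Proof.
  induction n as [|n IH]; intro Hk; [lia|]. simpl.
  destruct (Nat.eq_dec k n) as [->|Hne].
  - rewrite Nat.eqb_refl, (rsum_ext (f := fun i => if Nat.eqb i n then 0 else f i) (g := f));
      [ring|].
    intros i Hi. destruct (Nat.eqb_spec i n); [lia | auto].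
  - rewrite IH by lia. destruct (Nat.eqb_spec n k); [lia | ring].
Qed.
Lemma rsum_term_le f n k : (k < n)%nat -> (forall i, (i < n)%nat -> 0 <= f i) -> f k <= rsum f n.
Proof.
  intros Hk H. rewrite (rsum_split f Hk).
  enough (0 <= rsum (fun i => if Nat.eqb i k then 0 else f i) n) by lra.
  apply rsum_ge0. intros i Hi. destruct (Nat.eqb i k); [lra | auto].
Qed.

Definition kronecker (i j : nat) : R := if Nat.eqb i j then 1 else 0.

Lemma kronecker_sym i j : kronecker i j = kronecker j i.
Proof. unfold kronecker. now rewrite Nat.eqb_sym. Qed.

Lemma rsum_kronecker f n k : (k < n)%nat -> rsum (fun i => f i * kronecker i k) n = f k.
Proof.
  intro Hk. rewrite (rsum_split _ Hk). unfold kronecker. rewrite Nat.eqb_refl.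
  rewrite (rsum_ext (g := fun _ => 0)), rsum_const; [ring|].
  intros i Hi. destruct (Nat.eqb i k); ring.
Qed.

(* One pivot step of Gaussian elimination, read on coefficient vectors. *)
Lemma rsum_pivot l k (c Fx Fz : nat -> R) (a : R) : (k < l)%nat -> a <> 0 ->
  rsum (fun i => c i * (if Nat.eqb i k then Fx k / a else Fx i + - (Fz i / a) * Fx k)) l =
  rsum (fun i => (if Nat.eqb i k
                  then (c k - rsum (fun j => if Nat.eqb j k then 0 else c j * Fz j) l) / a
                  else c i) * Fx i) l.
Proof.
  intros Hk Ha. rewrite (rsum_split _ Hk), (rsum_split (fun i => _ * Fx i) Hk), !Nat.eqb_refl.
  rewrite (rsum_ext (f := fun i => if Nat.eqb i k then 0 else c i *
                       (if Nat.eqb i k then Fx k / a else Fx i + - (Fz i / a) * Fx k))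
                    (g := fun i => (if Nat.eqb i k then 0 else c i * Fx i)
                                   + - (Fx k / a) * (if Nat.eqb i k then 0 else c i * Fz i))).
  2:{ intros i _. destruct (Nat.eqb i k); field; auto. }
  rewrite rsum_plus, rsum_scal.
  set (ck := (c k - rsum (fun j => if Nat.eqb j k then 0 else c j * Fz j) l) / a).
  rewrite (rsum_ext (f := fun i => if Nat.eqb i k then 0 else (if Nat.eqb i k then ck else c i) * Fx i)
                    (g := fun i => if Nat.eqb i k then 0 else c i * Fx i)).
  2:{ intros i _. destruct (Nat.eqb i k); auto. }
  unfold ck. field. auto.
Qed.

Lemma zsum_IZR f n : IZR (zsum f n) = rsum (fun i => IZR (f i)) n.
Proof. induction n as [|n IH]; simpl; auto. now rewrite plus_IZR, IH. Qed.

(** * Commutator length and stable commutator length *)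

Section Group.
Variables (T : Type) (mul : T -> T -> T) (inv : T -> T) (e : T).
Hypothesis HG : is_group mul inv e.

Local Infix "**" := mul (at level 40, left associativity).
Local Notation "x ^+ n" := (gpow mul e x n) (at level 29, left associativity).

Definition zpow (x : T) (k : Z) : T :=
  match k with
  | Z0 => e
  | Zpos p => x ^+ Pos.to_nat p
  | Zneg p => inv (x ^+ Pos.to_nat p)
  end.

Lemma mulgA x y z : x ** (y ** z) = x ** y ** z. Proof. apply (g_assoc HG). Qed.
Lemma mul1g x : e ** x = x. Proof. apply (g_id_l HG). Qed.
Lemma mulg1 x : x ** e = x. Proof. apply (g_id_r HG). Qed.
Lemma mulVg x : inv x ** x = e. Proof. apply (g_inv_l HG). Qed.
Lemma mulgV x : x ** inv x = e. Proof. apply (g_inv_r HG). Qed.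

Lemma mulKg x y : inv x ** (x ** y) = y.
Proof. now rewrite mulgA, mulVg, mul1g. Qed.
Lemma mulKVg x y : x ** (inv x ** y) = y.
Proof. now rewrite mulgA, mulgV, mul1g. Qed.
Lemma mulgK x y : y ** x ** inv x = y.
Proof. now rewrite <- mulgA, mulgV, mulg1. Qed.
Lemma mulgKV x y : y ** inv x ** x = y.
Proof. now rewrite <- mulgA, mulVg, mulg1. Qed.

Lemma invg_unique x y : x ** y = e -> y = inv x.
Proof. intro H. now rewrite <- (mulKg x y), H, mulg1. Qed.
Lemma invgK x : inv (inv x) = x.
Proof. symmetry. apply invg_unique, mulVg. Qed.
Lemma invMg x y : inv (x ** y) = inv y ** inv x.
Proof. symmetry. apply invg_unique. now rewrite <- mulgA, (mulgA y), mulgV, mul1g, mulgV. Qed.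
Lemma invg1 : inv e = e.
Proof. symmetry. apply invg_unique, mul1g. Qed.
Lemma mulgI x y z : x ** y = x ** z -> y = z.
Proof. intro H. now rewrite <- (mulKg x y), H, mulKg. Qed.

Lemma conjgM t a b : t ** (a ** b) ** inv t = (t ** a ** inv t) ** (t ** b ** inv t).
Proof. now rewrite <- !mulgA, mulKg. Qed.
Lemma conjgV t a : t ** inv a ** inv t = inv (t ** a ** inv t).
Proof. now rewrite !invMg, invgK, mulgA. Qed.

Lemma gpowSr x n : x ^+ S n = x ^+ n ** x.
Proof.
  induction n as [|n IH].
  - simpl. now rewrite mulg1, mul1g.
  - change (x ^+ S (S n)) with (x ** x ^+ S n). rewrite IH at 1. apply mulgA.
Qed.
Lemma gpowD x n m : x ^+ (n + m) = x ^+ n ** x ^+ m.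
Proof. induction n as [|n IH]; simpl; [now rewrite mul1g | now rewrite IH, mulgA]. Qed.
Lemma gpowM x n m : x ^+ (n * m) = (x ^+ n) ^+ m.
Proof.
  induction m as [|m IH]; simpl; [now rewrite Nat.mul_0_r|].
  now rewrite Nat.mul_succ_r, Nat.add_comm, gpowD, IH.
Qed.
Lemma gpowC x n m : x ^+ n ** x ^+ m = x ^+ m ** x ^+ n.
Proof. now rewrite <- !gpowD, Nat.add_comm. Qed.
Lemma gpowCV x n m : x ^+ n ** inv (x ^+ m) = inv (x ^+ m) ** x ^+ n.
Proof. apply (mulgI (x := x ^+ m)). now rewrite mulgA, gpowC, mulgK, mulKVg. Qed.
Lemma gpow_conj g x n : (g ** x ** inv g) ^+ n = g ** x ^+ n ** inv g.
Proof.
  induction n as [|n IH]; simpl; [now rewrite mulg1, mulgV|].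
  now rewrite IH, !mulgA, mulgKV.
Qed.
Lemma gpowV x n : inv (x ^+ n) = (inv x) ^+ n.
Proof.
  induction n as [|n IH]; [apply invg1|].
  rewrite gpowSr at 1. now rewrite invMg, IH.
Qed.

Lemma zpow_nat x n : zpow x (Z.of_nat n) = x ^+ n.
Proof. destruct n; simpl; auto. now rewrite SuccNat2Pos.id_succ. Qed.

Lemma zpow_sub x n m : zpow x (Z.of_nat n - Z.of_nat m) = x ^+ n ** inv (x ^+ m).
Proof.
  destruct (le_lt_dec m n) as [H|H].
  - replace (Z.of_nat n - Z.of_nat m)%Z with (Z.of_nat (n - m)%nat) by lia.
    rewrite zpow_nat. replace n with ((n - m) + m)%nat at 2 by lia.
    now rewrite gpowD, mulgK.
  - replace (Z.of_nat n - Z.of_nat m)%Z with (Z.neg (Pos.of_succ_nat (m - n - 1)%nat)) by lia.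
    simpl. rewrite SuccNat2Pos.id_succ. replace m with (S (m - n - 1) + n)%nat at 2 by lia.
    now rewrite gpowD, invMg, mulKVg.
Qed.

(* Every integer is [n - m] with [n, m] natural, which reduces [zpow] to [gpow]. *)
Lemma zpowD x a b : zpow x (a + b) = zpow x a ** zpow x b.
Proof.
  replace a with (Z.of_nat (Z.to_nat a) - Z.of_nat (Z.to_nat (- a)))%Z by lia.
  replace b with (Z.of_nat (Z.to_nat b) - Z.of_nat (Z.to_nat (- b)))%Z by lia.
  set (n1 := Z.to_nat a); set (m1 := Z.to_nat (- a)).
  set (n2 := Z.to_nat b); set (m2 := Z.to_nat (- b)).
  replace (Z.of_nat n1 - Z.of_nat m1 + (Z.of_nat n2 - Z.of_nat m2))%Z
    with (Z.of_nat (n1 + n2)%nat - Z.of_nat (m1 + m2)%nat)%Z by lia.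
  rewrite !zpow_sub, !gpowD, invMg, <- !mulgA. f_equal.
  assert (HV : inv (x ^+ m2) ** inv (x ^+ m1) = inv (x ^+ m1) ** inv (x ^+ m2)).
  { now rewrite <- !invMg, gpowC. }
  now rewrite HV, mulgA, gpowCV, <- mulgA.
Qed.

Lemma gpow1 x : x ^+ 1 = x. Proof. apply mulg1. Qed.

Lemma zpowN x a : zpow x (- a) = inv (zpow x a).
Proof. apply invg_unique. rewrite <- zpowD. now replace (a + - a)%Z with 0%Z by lia. Qed.

Lemma zpow_conj g x a : zpow (g ** x ** inv g) a = g ** zpow x a ** inv g.
Proof.
  destruct a; simpl; [now rewrite mulg1, mulgV | apply gpow_conj |].
  now rewrite gpow_conj, !invMg, invgK, mulgA.
Qed.

Lemma zpow_gpow x n a : zpow (x ^+ n) a = zpow x (Z.of_nat n * a).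
Proof.
  replace a with (Z.of_nat (Z.to_nat a) - Z.of_nat (Z.to_nat (- a)))%Z by lia.
  set (p := Z.to_nat a); set (q := Z.to_nat (- a)).
  replace (Z.of_nat n * (Z.of_nat p - Z.of_nat q))%Z
    with (Z.of_nat (n * p)%nat - Z.of_nat (n * q)%nat)%Z by lia.
  now rewrite !zpow_sub, !gpowM.
Qed.

Section NormalSubgroup.
Variable N : T -> Prop.
Hypothesis HN : is_normal_subgroup mul inv e N.

Local Notation comm := (comm mul inv).
Local Notation pc := (prod_comm mul inv e N).
Local Notation in_GN := (in_GN mul inv e N).
Local Notation cl := (cl mul inv e N).
Local Notation scl := (scl mul inv e N).

Lemma N_one : N e. Proof. apply (ns_one HN). Qed.
Lemma N_mul x y : N x -> N y -> N (x ** y). Proof. apply (ns_mul HN). Qed.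
Lemma N_inv x : N x -> N (inv x). Proof. apply (ns_inv HN). Qed.
Lemma N_conj g x : N x -> N (g ** x ** inv g). Proof. apply (ns_conj HN). Qed.
Lemma N_gpow x n : N x -> N (x ^+ n).
Proof. intro H. induction n; simpl; [apply N_one | now apply N_mul]. Qed.
Lemma N_zpow x a : N x -> N (zpow x a).
Proof. intro H. destruct a; simpl; [apply N_one | | apply N_inv]; now apply N_gpow. Qed.
Lemma N_comm g x : N x -> N (comm g x).
Proof. intro H. apply N_mul; [now apply N_conj | now apply N_inv]. Qed.

Lemma comm_conj t g x : t ** comm g x ** inv t = comm (t ** g ** inv t) (t ** x ** inv t).
Proof.
  unfold Defs.comm.
  rewrite (conjgM t (g ** x ** inv g) (inv x)), (conjgM t (g ** x) (inv g)), (conjgM t g x).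
  now rewrite (conjgV t g), (conjgV t x).
Qed.

Lemma commV g x : inv (comm g x) = comm (x ** g ** inv x) (inv x).
Proof.
  unfold Defs.comm. rewrite (invMg _ (inv x)), invgK, <- (conjgV g x), <- (conjgV x g).
  now rewrite <- !mulgA, mulKg, mulVg, mulg1.
Qed.

Lemma prod_comm_one : pc e 0. Proof. reflexivity. Qed.
Lemma prod_comm_S y m : pc y m -> pc y (S m).
Proof.
  intro H. exists e, e, y. split; [apply N_one | split; auto].
  unfold Defs.comm. now rewrite invg1, !mulg1, mul1g.
Qed.
Lemma prod_comm_mono y m m' : pc y m -> (m <= m')%nat -> pc y m'.
Proof. intros H Hm. induction Hm; auto. now apply prod_comm_S. Qed.

Lemma prod_comm_mul a b m m' : pc a m -> pc b m' -> pc (a ** b) (m + m').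
Proof.
  revert a. induction m as [|m IH]; intros a Ha Hb; simpl in *.
  - subst. now rewrite mul1g.
  - destruct Ha as [g [x [z [Hx [Hz ->]]]]]. exists g, x, (z ** b).
    repeat split; auto. symmetry. apply mulgA.
Qed.
Lemma prod_comm_comm g x : N x -> pc (comm g x) 1.
Proof. intro H. exists g, x, e. repeat split; auto. now rewrite mulg1. Qed.

Lemma prod_comm_conj t y m : pc y m -> pc (t ** y ** inv t) m.
Proof.
  revert y. induction m as [|m IH]; intros y H; simpl in *.
  - subst. now rewrite mulg1, mulgV.
  - destruct H as [g [x [z [Hx [Hz ->]]]]].
    exists (t ** g ** inv t), (t ** x ** inv t), (t ** z ** inv t).
    repeat split; [now apply N_conj | now apply IH |].
    now rewrite <- comm_conj, conjgM.
Qed.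

Lemma prod_comm_inv y m : pc y m -> pc (inv y) m.
Proof.
  revert y. induction m as [|m IH]; intros y H.
  - simpl in *. subst. apply invg1.
  - destruct H as [g [x [z [Hx [Hz ->]]]]].
    rewrite invMg, commV. replace (S m) with (m + 1)%nat by lia.
    apply prod_comm_mul; auto. apply prod_comm_comm. now apply N_inv.
Qed.

Lemma prod_comm_N y m : pc y m -> N y.
Proof.
  revert y. induction m as [|m IH]; intros y H; simpl in *; [subst; apply N_one|].
  destruct H as [g [x [z [Hx [Hz ->]]]]]. apply N_mul; [now apply N_comm | now apply IH].
Qed.

Lemma in_GN_one : in_GN e. Proof. now exists 0%nat. Qed.
Lemma in_GN_mul a b : in_GN a -> in_GN b -> in_GN (a ** b).
Proof. intros [m Hm] [m' Hm']. exists (m + m')%nat. now apply prod_comm_mul. Qed.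
Lemma in_GN_inv a : in_GN a -> in_GN (inv a).
Proof. intros [m Hm]. exists m. now apply prod_comm_inv. Qed.
Lemma in_GN_gpow a n : in_GN a -> in_GN (a ^+ n).
Proof. intro H. induction n; simpl; [apply in_GN_one | now apply in_GN_mul]. Qed.
Lemma in_GN_zpow a k : in_GN a -> in_GN (zpow a k).
Proof.
  intro H. destruct k; simpl; [apply in_GN_one | | apply in_GN_inv]; now apply in_GN_gpow.
Qed.
Lemma in_GN_N a : in_GN a -> N a.
Proof. intros [m Hm]. exact (prod_comm_N Hm). Qed.
Lemma in_GN_dist x y : in_GN x -> in_GN y -> in_GN (inv x ** y).
Proof. intros Hx Hy. apply in_GN_mul; [now apply in_GN_inv | exact Hy]. Qed.

Lemma cl_spec y : in_GN y -> pc y (cl y) /\ forall m, pc y m -> (cl y <= m)%nat.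
Proof.
  intro H. unfold Defs.cl. apply epsilon_spec.
  destruct (dec_inh_nat_subset_has_unique_least_element (pc y) (fun n => classic _) H)
    as [n [[Hn Hmin] _]].
  now exists n.
Qed.
Lemma prod_comm_cl y : in_GN y -> pc y (cl y). Proof. intro H. apply (cl_spec H). Qed.
Lemma cl_le y m : pc y m -> (cl y <= m)%nat.
Proof. intro H. now apply (cl_spec (ex_intro _ m H)). Qed.

Lemma cl_mul a b : in_GN a -> in_GN b -> (cl (a ** b) <= cl a + cl b)%nat.
Proof. intros Ha Hb. apply cl_le, prod_comm_mul; now apply prod_comm_cl. Qed.
Lemma cl_gpowD y n m : in_GN y -> (cl (y ^+ (n + m)) <= cl (y ^+ n) + cl (y ^+ m))%nat.
Proof. intro H. rewrite gpowD. apply cl_mul; now apply in_GN_gpow. Qed.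
Lemma cl_gpowM y q j : in_GN y -> (cl (y ^+ (q * j)) <= q * cl (y ^+ j))%nat.
Proof.
  intro H. induction q as [|q IH]; [apply cl_le; simpl; reflexivity|].
  simpl. eapply Nat.le_trans; [apply cl_gpowD; auto | lia].
Qed.

Definition cl_avg (y : T) (n : nat) : R := INR (cl (y ^+ n)) / INR n.

Lemma cl_avg_bounds y n : in_GN y -> (1 <= n)%nat -> 0 <= cl_avg y n <= INR (cl y).
Proof.
  intros H Hn. unfold cl_avg. assert (0 < INR n) by (apply lt_0_INR; lia).
  split; [apply Rdiv_le_0_compat; auto; apply pos_INR|].
  apply Rmult_le_reg_r with (INR n); auto. unfold Rdiv. rewrite Rmult_assoc, Rinv_l, Rmult_1_r by lra.
  rewrite <- mult_INR. apply le_INR. replace n with (n * 1)%nat at 1 by lia.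
  eapply Nat.le_trans; [apply cl_gpowM; auto|]. rewrite gpow1. lia.
Qed.

(* Fekete's argument: write [n = q j + r] with [r < j]. *)
Lemma cl_avg_fekete y j n : in_GN y -> (1 <= j)%nat -> (1 <= n)%nat ->
  cl_avg y n <= cl_avg y j + INR j * INR (cl y) / INR n.
Proof.
  intros H Hj Hn. unfold cl_avg.
  set (q := (n / j)%nat). set (r := (n mod j)%nat).
  assert (Hd : n = (j * q + r)%nat) by (apply Nat.div_mod; lia).
  assert (Hr : (r < j)%nat) by (apply Nat.mod_upper_bound; lia).
  assert (HC : (cl (y ^+ n) <= q * cl (y ^+ j) + r * cl y)%nat).
  { rewrite Hd. eapply Nat.le_trans; [apply cl_gpowD; auto|].
    apply Nat.add_le_mono; [rewrite Nat.mul_comm; apply cl_gpowM; auto|].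
    replace r with (r * 1)%nat at 1 by lia. eapply Nat.le_trans; [apply cl_gpowM; auto|].
    rewrite gpow1. lia. }
  assert (0 < INR n) by (apply lt_0_INR; lia).
  assert (0 < INR j) by (apply lt_0_INR; lia).
  apply le_INR in HC. rewrite plus_INR, !mult_INR in HC.
  assert (Hq : INR q * INR j <= INR n) by (rewrite <- mult_INR; apply le_INR; lia).
  assert (Hr' : INR r <= INR j) by (apply le_INR; lia).
  assert (Hc1 : 0 <= INR (cl y)) by apply pos_INR.
  set (A := INR (cl (y ^+ j)) / INR j).
  assert (HA : 0 <= A) by (unfold A; apply Rdiv_le_0_compat; [apply pos_INR | lra]).
  replace (INR (cl (y ^+ j))) with (A * INR j) in HC by (unfold A; field; lra).
  replace (A + INR j * INR (cl y) / INR n) with ((INR n * A + INR j * INR (cl y)) / INR n)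
    by (field; lra).
  apply Rmult_le_compat_r; [left; apply Rinv_0_lt_compat; lra | nra].
Qed.

Lemma cl_avg_glb y : in_GN y -> exists L,
  (forall n, (1 <= n)%nat -> L <= cl_avg y n) /\
  (forall c, (forall n, (1 <= n)%nat -> c <= cl_avg y n) -> c <= L).
Proof.
  intro H. set (E := fun r => exists n, (1 <= n)%nat /\ r = - cl_avg y n).
  assert (Hb : bound E).
  { exists 0. intros r [n [Hn ->]]. pose proof (cl_avg_bounds H Hn). lra. }
  destruct (completeness E Hb (ex_intro _ _ (ex_intro _ 1%nat (conj (le_n 1) eq_refl))))
    as [m [Hm1 Hm2]].
  exists (- m). split.
  - intros n Hn. enough (- cl_avg y n <= m) by lra. apply Hm1. now exists n.
  - intros c Hc. enough (m <= - c) by lra. apply Hm2. intros r [n [Hn ->]].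
    specialize (Hc n Hn). lra.
Qed.

Lemma is_lim_cl_avg y L : in_GN y ->
  (forall n, (1 <= n)%nat -> L <= cl_avg y n) ->
  (forall c, (forall n, (1 <= n)%nat -> c <= cl_avg y n) -> c <= L) ->
  is_lim_seq (cl_avg y) L.
Proof.
  intros H HL1 HL2. apply is_lim_seq_spec. intro eps. pose proof (cond_pos eps).
  assert (Hj : exists j, (1 <= j)%nat /\ cl_avg y j < L + eps / 2).
  { apply NNPP. intro Hno. enough (L + eps / 2 <= L) by lra.
    apply HL2. intros n Hn. apply Rnot_lt_le. intro. apply Hno. now exists n. }
  destruct Hj as [j [Hj Hj2]].
  destruct (INR_archimed (eps / 2) (INR j * INR (cl y))) as [K HK]; [lra|].
  exists (S K). intros n Hn.
  assert (Hn1 : (1 <= n)%nat) by lia.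
  pose proof (HL1 n Hn1). pose proof (cl_avg_fekete H Hj Hn1).
  assert (0 < INR n) by (apply lt_0_INR; lia).
  assert (INR j * INR (cl y) / INR n < eps / 2).
  { apply Rmult_lt_reg_r with (INR n); auto. unfold Rdiv.
    rewrite Rmult_assoc, Rinv_l, Rmult_1_r by lra.
    assert (INR K <= INR n) by (apply le_INR; lia).
    assert (0 <= INR j * INR (cl y)) by (apply Rmult_le_pos; apply pos_INR).
    nra. }
  rewrite Rabs_right; lra.
Qed.

Lemma scl_is_inf y : in_GN y ->
  (forall n, (1 <= n)%nat -> scl y <= cl_avg y n) /\
  (forall c, (forall n, (1 <= n)%nat -> c <= cl_avg y n) -> c <= scl y).
Proof.
  intro H. destruct (cl_avg_glb H) as [L [HL1 HL2]].
  replace (scl y) with L; [auto|].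
  unfold Defs.scl. change (L = real (Lim_seq (cl_avg y))).
  now rewrite (is_lim_seq_unique _ _ (is_lim_cl_avg H HL1 HL2)).
Qed.

Lemma scl_le y j m : in_GN y -> (1 <= j)%nat -> pc (y ^+ j) m -> scl y <= INR m / INR j.
Proof.
  intros H Hj Hp. eapply Rle_trans; [apply (proj1 (scl_is_inf H)); eauto|].
  unfold cl_avg, Rdiv. apply Rmult_le_compat_r.
  - apply Rlt_le, Rinv_0_lt_compat, lt_0_INR; lia.
  - now apply le_INR, cl_le.
Qed.

Lemma scl_ge0 y : in_GN y -> 0 <= scl y.
Proof. intro H. apply (proj2 (scl_is_inf H)). intros n Hn. apply (cl_avg_bounds H Hn). Qed.

Lemma prod_comm_gpow_mul x y k : N x -> N y ->
  pc (x ^+ k ** y ^+ k ** inv ((x ** y) ^+ k)) k.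
Proof.
  intros Hx Hy. induction k as [|k IH].
  - simpl. now rewrite mul1g, invg1, mul1g.
  - replace (x ^+ S k ** y ^+ S k ** inv ((x ** y) ^+ S k)) with
      ((x ^+ k ** comm x (y ^+ k) ** inv (x ^+ k)) ** (x ^+ k ** y ^+ k ** inv ((x ** y) ^+ k))).
    + replace (S k) with (1 + k)%nat by lia. apply prod_comm_mul; auto.
      apply prod_comm_conj, prod_comm_comm. now apply N_gpow.
    + rewrite !gpowSr. unfold Defs.comm. rewrite !invMg, <- !mulgA, !mulKg. now rewrite mulKVg.
Qed.

(** * Invariant quasimorphisms *)

Definition is_Q_inv_defect (D : R) (psi : T -> R) : Prop :=
  (forall x (n : nat), N x -> psi (x ^+ n) = INR n * psi x) /\
  (forall x1 x2, N x1 -> N x2 -> Rabs (psi (x1 ** x2) - psi x1 - psi x2) <= D) /\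
  (forall g x, N x -> psi (g ** x ** inv g) = psi x).

Lemma is_Q_inv_defect_exists psi : is_Q_inv mul inv e N psi -> exists D, is_Q_inv_defect D psi.
Proof. intros [H1 [[D H2] H3]]. now exists D. Qed.

Lemma is_Q_inv_of_defect D psi : is_Q_inv_defect D psi -> is_Q_inv mul inv e N psi.
Proof. intros [H1 [H2 H3]]. repeat split; auto. now exists D. Qed.

Lemma is_Q_inv_defect_le D D' psi : is_Q_inv_defect D psi -> D <= D' -> is_Q_inv_defect D' psi.
Proof.
  intros [H1 [H2 H3]] HD. repeat split; auto. intros. eapply Rle_trans; [apply H2; auto | exact HD].
Qed.

Lemma eq0_of_INR_mul_Rabs_bounded (a C : R) : (forall n : nat, INR n * Rabs a <= C) -> a = 0.
Proof.
  intro H. destruct (Req_dec a 0) as [|Ha]; auto.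
  destruct (INR_archimed (Rabs a) C) as [n Hn]; [now apply Rabs_pos_lt|].
  specialize (H n). lra.
Qed.

Section Quasimorphism.
Variables (D : R) (psi : T -> R).
Hypothesis Hpsi : is_Q_inv_defect D psi.

Lemma qm_gpow x n : N x -> psi (x ^+ n) = INR n * psi x. Proof. apply Hpsi. Qed.
Lemma qm_defect x1 x2 : N x1 -> N x2 -> Rabs (psi (x1 ** x2) - psi x1 - psi x2) <= D.
Proof. apply Hpsi. Qed.
Lemma qm_conj g x : N x -> psi (g ** x ** inv g) = psi x. Proof. apply Hpsi. Qed.

Lemma qm_one : psi e = 0.
Proof. pose proof (qm_gpow 0 N_one). simpl in *. lra. Qed.

Lemma qm_defect_ge0 : 0 <= D.
Proof. eapply Rle_trans; [apply Rabs_pos | exact (qm_defect N_one N_one)]. Qed.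

(* Homogeneity scales the defect of the pair [x^n, (x^-1)^n] by [n]. *)
Lemma qm_inv x : N x -> psi (inv x) = - psi x.
Proof.
  intro Hx. enough (psi x + psi (inv x) = 0) by lra.
  apply eq0_of_INR_mul_Rabs_bounded with D. intro n.
  pose proof (qm_defect (N_gpow n Hx) (N_gpow n (N_inv Hx))) as H.
  assert (E : x ^+ n ** (inv x) ^+ n = e) by (rewrite <- gpowV; apply mulgV).
  rewrite E, qm_one, (qm_gpow n Hx), (qm_gpow n (N_inv Hx)) in H.
  replace (0 - INR n * psi x - INR n * psi (inv x)) with (- (INR n * (psi x + psi (inv x))))
    in H by ring.
  now rewrite Rabs_Ropp, Rabs_mult, (Rabs_pos_eq (INR n)) in H by apply pos_INR.
Qed.

Lemma qm_zpow x a : N x -> psi (zpow x a) = IZR a * psi x.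
Proof.
  intro Hx. destruct a; simpl.
  - rewrite qm_one. ring.
  - rewrite qm_gpow, INR_IZR_INZ, positive_nat_Z; auto.
  - rewrite qm_inv, qm_gpow, INR_IZR_INZ, positive_nat_Z, <- Pos2Z.opp_pos, opp_IZR;
      [ring | auto | now apply N_gpow].
Qed.

Lemma qm_comm g x : N x -> Rabs (psi (comm g x)) <= D.
Proof.
  intro Hx. pose proof (qm_defect (N_conj g Hx) (N_inv Hx)) as H.
  rewrite qm_conj, qm_inv in H; auto.
  now replace (psi (g ** x ** inv g ** inv x) - psi x - - psi x)
    with (psi (g ** x ** inv g ** inv x)) in H by ring.
Qed.

Lemma qm_prod_comm y m : pc y m -> Rabs (psi y) <= 2 * INR m * D.
Proof.
  revert y. induction m as [|m IH]; intros y Hy; simpl in Hy.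
  - subst. rewrite qm_one, Rabs_R0. simpl. lra.
  - destruct Hy as [g [x [z [Hx [Hz ->]]]]].
    pose proof (qm_defect (N_comm g Hx) (prod_comm_N Hz)).
    pose proof (qm_comm g Hx). pose proof (IH z Hz). rewrite S_INR.
    pose proof (Rabs_triang_inv (psi (comm g x ** z)) (psi (comm g x) + psi z)).
    pose proof (Rabs_triang (psi (comm g x)) (psi z)).
    replace (psi (comm g x ** z) - (psi (comm g x) + psi z))
      with (psi (comm g x ** z) - psi (comm g x) - psi z) in * by ring.
    lra.
Qed.

Lemma qm_scl y : in_GN y -> Rabs (psi y) <= 2 * D * scl y.
Proof.
  intro Hy. pose proof qm_defect_ge0. pose proof (scl_ge0 Hy).
  destruct (Req_dec D 0) as [HD|HD].
  - pose proof (qm_prod_comm (prod_comm_cl Hy)). subst D. nra.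
  - enough (Rabs (psi y) / (2 * D) <= scl y) as Hs.
    { apply Rmult_le_reg_r with (/ (2 * D)); [apply Rinv_0_lt_compat; lra|].
      replace (2 * D * scl y * / (2 * D)) with (scl y) by (field; lra). exact Hs. }
    apply (proj2 (scl_is_inf Hy)). intros n Hn.
    assert (Hn0 : 0 < INR n) by (apply lt_0_INR; lia).
    pose proof (qm_prod_comm (prod_comm_cl (in_GN_gpow n Hy))) as Hb.
    rewrite qm_gpow, Rabs_mult, Rabs_pos_eq in Hb by (lra || now apply in_GN_N).
    unfold cl_avg. apply Rmult_le_reg_r with (2 * D * INR n); [nra|].
    replace (Rabs (psi y) / (2 * D) * (2 * D * INR n)) with (INR n * Rabs (psi y)) by (field; lra).
    replace (INR (cl (y ^+ n)) / INR n * (2 * D * INR n)) with (2 * INR (cl (y ^+ n)) * D)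
      by (field; lra).
    exact Hb.
Qed.

(* [(xy)^k] and [x^k y^k] differ by [k] commutators, on which [psi] vanishes. *)
Lemma qm_additive_of_vanishing : (forall z, in_GN z -> psi z = 0) ->
  forall x y, N x -> N y -> psi (x ** y) = psi x + psi y.
Proof.
  intros Hv x y Hx Hy. enough (psi (x ** y) - psi x - psi y = 0) by lra.
  apply eq0_of_INR_mul_Rabs_bounded with (2 * D). intro k.
  set (A := x ^+ k ** y ^+ k ** inv ((x ** y) ^+ k)).
  assert (HA : in_GN A) by (exists k; now apply prod_comm_gpow_mul).
  assert (E : (x ** y) ^+ k = inv A ** (x ^+ k ** y ^+ k)).
  { unfold A. now rewrite !invMg, invgK, <- !mulgA, mulKg, mulVg, mulg1. }
  pose proof (qm_defect (N_inv (in_GN_N HA)) (N_mul (N_gpow k Hx) (N_gpow k Hy))) as H1.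
  pose proof (qm_defect (N_gpow k Hx) (N_gpow k Hy)) as H2.
  rewrite <- E, (Hv (inv A)), (qm_gpow k (N_mul Hx Hy)) in H1 by now apply in_GN_inv.
  rewrite (qm_gpow k Hx), (qm_gpow k Hy) in H2.
  rewrite <- (Rabs_pos_eq (INR k)), <- Rabs_mult by apply pos_INR.
  replace (INR k * (psi (x ** y) - psi x - psi y)) with
    ((INR k * psi (x ** y) - 0 - psi (x ^+ k ** y ^+ k))
     + (psi (x ^+ k ** y ^+ k) - INR k * psi x - INR k * psi y)) by ring.
  eapply Rle_trans; [apply Rabs_triang | lra].
Qed.

End Quasimorphism.

Local Notation Q_inv := (is_Q_inv mul inv e N).
Local Notation H1_inv := (is_H1_inv mul inv N).

Lemma H1_one h : H1_inv h -> h e = 0.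
Proof. intros [Hadd _]. pose proof (Hadd e e N_one N_one). rewrite mul1g in H. lra. Qed.

Lemma H1_inv_neg h x : H1_inv h -> N x -> h (inv x) = - h x.
Proof.
  intros Hh Hx. pose proof (proj1 Hh x (inv x) Hx (N_inv Hx)).
  rewrite mulgV, H1_one in H; auto. lra.
Qed.

Lemma H1_vanish_GN h z : H1_inv h -> in_GN z -> h z = 0.
Proof.
  intros Hh [m Hm]. revert z Hm. induction m as [|m IH]; intros z Hz; simpl in Hz.
  - subst. now apply H1_one.
  - destruct Hz as [g [x [w [Hx [Hw ->]]]]].
    rewrite (proj1 Hh _ _ (N_comm g Hx) (prod_comm_N Hw)), (IH w Hw). unfold Defs.comm.
    rewrite (proj1 Hh _ _ (N_conj g Hx) (N_inv Hx)), (proj2 Hh), H1_inv_neg; auto. ring.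
Qed.

Lemma H1_of_Q_vanishing f : Q_inv f -> (forall z, in_GN z -> f z = 0) -> H1_inv f.
Proof.
  intros Hf Hv. destruct (is_Q_inv_defect_exists Hf) as [D Hq]. split.
  - now apply (qm_additive_of_vanishing Hq).
  - apply Hq.
Qed.

Lemma Q_inv_lincomb f g b : Q_inv f -> Q_inv g -> Q_inv (fun x => f x + b * g x).
Proof.
  intros Hf Hg.
  destruct (is_Q_inv_defect_exists Hf) as [D1 [A1 [B1 C1]]].
  destruct (is_Q_inv_defect_exists Hg) as [D2 [A2 [B2 C2]]].
  apply (@is_Q_inv_of_defect (D1 + Rabs b * D2)). repeat split.
  - intros x n Hx. rewrite A1, A2 by auto. ring.
  - intros x1 x2 H1 H2. specialize (B1 x1 x2 H1 H2). specialize (B2 x1 x2 H1 H2).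
    replace (f (x1 ** x2) + b * g (x1 ** x2) - (f x1 + b * g x1) - (f x2 + b * g x2))
      with ((f (x1 ** x2) - f x1 - f x2) + b * (g (x1 ** x2) - g x1 - g x2)) by ring.
    eapply Rle_trans; [apply Rabs_triang|]. rewrite Rabs_mult.
    pose proof (Rabs_pos b). nra.
  - intros g0 x Hx. now rewrite C1, C2.
Qed.

Lemma Q_inv_scale f b : Q_inv f -> Q_inv (fun x => b * f x).
Proof.
  intro Hf. destruct (is_Q_inv_defect_exists Hf) as [D [A [B C]]].
  apply (@is_Q_inv_of_defect (Rabs b * D)). repeat split.
  - intros x n Hx. rewrite A by auto. ring.
  - intros x1 x2 H1 H2. specialize (B x1 x2 H1 H2).
    replace (b * f (x1 ** x2) - b * f x1 - b * f x2) with (b * (f (x1 ** x2) - f x1 - f x2))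
      by ring.
    rewrite Rabs_mult. pose proof (Rabs_pos b). nra.
  - intros g0 x Hx. now rewrite C.
Qed.


(** * Filling costs and Bavard duality *)

Definition indicator (x : T) : T -> Z :=
  fun y => if excluded_middle_informative (y = x) then 1%Z else 0%Z.

Lemma indicator_eq x : indicator x x = 1%Z.
Proof. unfold indicator. destruct (excluded_middle_informative (x = x)); tauto. Qed.
Lemma indicator_neq x y : y <> x -> indicator x y = 0%Z.
Proof. intro H. unfold indicator. destruct (excluded_middle_informative (y = x)); tauto. Qed.

(* A term [Term g a t] stands for [t g^(K a) t^-1] at scale [K], and for [a g] in the chain. *)
Record term := Term { gen : T; coef : Z; conjugator : T }.

Definition chain (L : list term) : T -> Z :=
  fold_right (fun x acc => vadd (vscal (coef x) (indicator (gen x))) acc) vzero L.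
Definition conj_pow (K : Z) (x : term) : T :=
  conjugator x ** zpow (gen x) (K * coef x) ** inv (conjugator x).
Definition conj_pow_prod (K : Z) (L : list term) : T :=
  fold_right (fun x acc => conj_pow K x ** acc) e L.
Definition gens_in_N (L : list term) : Prop := forall x, In x L -> N (gen x).
Definition chain_data (L : list term) : list (T * Z) := map (fun x => (gen x, coef x)) L.

Lemma chain_cons x L y : chain (x :: L) y = (coef x * indicator (gen x) y + chain L y)%Z.
Proof. reflexivity. Qed.
Lemma chain_app L1 L2 : chain (L1 ++ L2) = vadd (chain L1) (chain L2).
Proof.
  induction L1 as [|x L1 IH]; apply functional_extensionality; intro y; [reflexivity|].
  simpl. rewrite IH. unfold vadd, vscal. lia.
Qed.
Lemma chain_of_data L1 L2 : chain_data L1 = chain_data L2 -> chain L1 = chain L2.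
Proof.
  revert L2. induction L1 as [|x L1 IH]; intros [|y L2] H; simpl in *; try discriminate; auto.
  injection H. intros H1 Hc Hg. unfold vadd, vscal. now rewrite Hg, Hc, (IH L2 H1).
Qed.
Lemma gens_in_N_of_data L1 L2 : chain_data L1 = chain_data L2 -> gens_in_N L2 -> gens_in_N L1.
Proof.
  intros H H2 x Hx. assert (Hin : In (gen x, coef x) (chain_data L2)).
  { rewrite <- H. now apply (in_map (fun x => (gen x, coef x))). }
  apply in_map_iff in Hin. destruct Hin as [y [Hy1 Hy2]]. injection Hy1. intros _ <-. now apply H2.
Qed.
Lemma length_chain_data L : length (chain_data L) = length L.
Proof. apply length_map. Qed.

Lemma conj_pow_prod_app K L1 L2 :
  conj_pow_prod K (L1 ++ L2) = conj_pow_prod K L1 ** conj_pow_prod K L2.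
Proof. induction L1; simpl; [now rewrite mul1g | now rewrite IHL1, mulgA]. Qed.
Lemma N_conj_pow K x : N (gen x) -> N (conj_pow K x).
Proof. intro H. now apply N_conj, N_zpow. Qed.
Lemma N_conj_pow_prod K L : gens_in_N L -> N (conj_pow_prod K L).
Proof.
  induction L as [|x L IH]; intro H; simpl; [apply N_one|].
  apply N_mul; [apply N_conj_pow, H; now left | apply IH; intros y Hy; apply H; now right].
Qed.

(* The [K1]- and [K2]-powers can be merged, factor by factor, at the cost of one commutator per term. *)
Lemma conj_pow_prod_add (K1 K2 : Z) L : gens_in_N L -> exists w, pc w (length L) /\
  conj_pow_prod K1 L ** conj_pow_prod K2 L = conj_pow_prod (K1 + K2) L ** w.
Proof.
  induction L as [|x L IH]; intro HL.
  - exists e. split; [apply prod_comm_one | simpl; now rewrite !mul1g].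
  - destruct IH as [w' [Hw' E']]; [intros y Hy; apply HL; now right|].
    simpl conj_pow_prod.
    set (X' := conj_pow_prod K1 L). set (Y' := conj_pow_prod K2 L).
    set (Z' := conj_pow_prod (K1 + K2) L). set (q := conj_pow K2 x).
    assert (HqN : N q) by (apply N_conj_pow, HL; now left).
    assert (HXN : N X') by (apply N_conj_pow_prod; intros y Hy; apply HL; now right).
    assert (Hpq : conj_pow K1 x ** q = conj_pow (K1 + K2) x).
    { unfold q, conj_pow. rewrite <- !mulgA, mulKg. f_equal. rewrite !mulgA. f_equal.
      rewrite <- zpowD. f_equal. lia. }
    set (c := comm (inv X') (inv q)).
    exists (w' ** (inv Y' ** c ** Y')). split.
    + simpl length. rewrite <- Nat.add_1_r. apply prod_comm_mul; auto.
      replace (inv Y' ** c ** Y') with (inv Y' ** c ** inv (inv Y')) by now rewrite invgK.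
      apply prod_comm_conj, prod_comm_comm. now apply N_inv.
    + rewrite <- Hpq. fold X' Y' Z'. unfold c, Defs.comm. rewrite !invgK, <- !mulgA. f_equal.
      fold X' Y' Z' in E'. now rewrite (mulgA Z' w'), <- E', <- !mulgA, !mulKVg.
Qed.

Lemma prod_comm_conj_pow_prod_mul k L m j : gens_in_N L ->
  pc (conj_pow_prod (Z.of_nat k) L) m -> (1 <= j)%nat ->
  pc (conj_pow_prod (Z.of_nat (k * j)) L) (j * m + (j - 1) * length L).
Proof.
  intros HL Hm Hj. induction j as [|j IH]; [lia|].
  destruct (Nat.eq_dec j 0) as [->|Hj0].
  - replace (1 * m + (1 - 1) * length L)%nat with m by lia.
    now replace (k * 1)%nat with k by lia.
  - specialize (IH ltac:(lia)).
    destruct (conj_pow_prod_add (Z.of_nat (k * j)) (Z.of_nat k) HL) as [w [Hw E]].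
    replace (Z.of_nat (k * S j)) with (Z.of_nat (k * j) + Z.of_nat k)%Z by lia.
    replace (conj_pow_prod (Z.of_nat (k * j) + Z.of_nat k) L)
      with (conj_pow_prod (Z.of_nat (k * j)) L ** conj_pow_prod (Z.of_nat k) L ** inv w)
      by now rewrite E, <- mulgA, mulgV, mulg1.
    eapply prod_comm_mono.
    + apply prod_comm_mul; [apply prod_comm_mul; [exact IH | exact Hm] | apply prod_comm_inv, Hw].
    + nia.
Qed.

(* [c] is filled at scale [k] with [m] commutators. *)
Definition filling_cost (c : T -> Z) (r : R) : Prop :=
  exists L k m, (1 <= k)%nat /\ gens_in_N L /\ chain L = c /\
    pc (conj_pow_prod (Z.of_nat k) L) m /\ (INR m + INR (length L)) / INR k <= r.

Lemma filling_cost_ge0 c r : filling_cost c r -> 0 <= r.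
Proof.
  intros [L [k [m [Hk [_ [_ [_ Hr]]]]]]]. eapply Rle_trans; [|exact Hr].
  apply Rdiv_le_0_compat; [pose proof (pos_INR m); pose proof (pos_INR (length L)); lra|].
  apply lt_0_INR; lia.
Qed.

Lemma filling_cost_zero : filling_cost vzero 0.
Proof.
  exists nil, 1%nat, 0%nat. repeat split; [lia | intros x [] | simpl; lra].
Qed.

(* Two fillings are combined at the common scale [k1 k2]. *)
Lemma filling_cost_add a b r s :
  filling_cost a r -> filling_cost b s -> filling_cost (vadd a b) (r + s).
Proof.
  intros [L1 [k1 [m1 [Hk1 [HL1 [Hc1 [Hm1 Hr1]]]]]]] [L2 [k2 [m2 [Hk2 [HL2 [Hc2 [Hm2 Hr2]]]]]]].
  exists (L1 ++ L2), (k1 * k2)%nat,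
    (k2 * m1 + (k2 - 1) * length L1 + (k1 * m2 + (k1 - 1) * length L2))%nat.
  repeat split; [nia | | now rewrite chain_app, Hc1, Hc2 | |].
  - intros x Hx. apply in_app_iff in Hx. destruct Hx; [apply HL1 | apply HL2]; auto.
  - rewrite conj_pow_prod_app. apply prod_comm_mul.
    + now apply prod_comm_conj_pow_prod_mul.
    + rewrite Nat.mul_comm. now apply prod_comm_conj_pow_prod_mul.
  - rewrite length_app.
    replace (INR (k2 * m1 + (k2 - 1) * length L1 + (k1 * m2 + (k1 - 1) * length L2))
             + INR (length L1 + length L2))
      with (INR k2 * (INR m1 + INR (length L1)) + INR k1 * (INR m2 + INR (length L2)))
      by (rewrite <- !plus_INR, <- !mult_INR, <- !plus_INR; f_equal; nia).
    rewrite mult_INR.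
    assert (0 < INR k1) by (apply lt_0_INR; lia). assert (0 < INR k2) by (apply lt_0_INR; lia).
    replace ((INR k2 * (INR m1 + INR (length L1)) + INR k1 * (INR m2 + INR (length L2)))
             / (INR k1 * INR k2))
      with ((INR m1 + INR (length L1)) / INR k1 + (INR m2 + INR (length L2)) / INR k2)
      by (field; lra).
    lra.
Qed.

Definition term_opp (x : term) : term := Term (gen x) (- coef x) (conjugator x).

Lemma filling_cost_opp a r : filling_cost a r -> filling_cost (vopp a) r.
Proof.
  intros [L [k [m [Hk [HL [Hc [Hm Hr]]]]]]].
  exists (rev (map term_opp L)), k, m. repeat split; auto.
  - intros x Hx. apply in_rev, in_map_iff in Hx. destruct Hx as [y [<- Hy]]. exact (HL y Hy).
  - rewrite <- Hc. clear Hc Hm Hr HL. induction L as [|x L IH]; simpl; [vext|].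
    rewrite chain_app, IH. apply functional_extensionality. intro y. simpl.
    unfold vadd, vopp, vscal, vzero. lia.
  - replace (conj_pow_prod (Z.of_nat k) (rev (map term_opp L)))
      with (inv (conj_pow_prod (Z.of_nat k) L)); [now apply prod_comm_inv|].
    clear Hc Hm Hr HL. induction L as [|x L IH]; simpl; [apply invg1|].
    rewrite conj_pow_prod_app, <- IH, invMg. simpl. rewrite mulg1. f_equal.
    unfold conj_pow, term_opp. simpl. rewrite <- conjgV, <- zpowN. do 3 f_equal. lia.
  - now rewrite length_rev, length_map.
Qed.

Definition drop_gen (z : T) (L : list term) : list term :=
  filter (fun x => if excluded_middle_informative (gen x = z) then false else true) L.

Lemma drop_gen_cons z x L :
  drop_gen z (x :: L) = if excluded_middle_informative (gen x = z) then drop_gen z L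
                        else x :: drop_gen z L.
Proof. unfold drop_gen. simpl. now destruct (excluded_middle_informative (gen x = z)). Qed.

Lemma chain_drop_gen z L y :
  chain (drop_gen z L) y = if excluded_middle_informative (y = z) then 0%Z else chain L y.
Proof.
  induction L as [|x L IH].
  - simpl. now destruct (excluded_middle_informative (y = z)).
  - rewrite drop_gen_cons, chain_cons. destruct (excluded_middle_informative (gen x = z)) as [Hx|Hx].
    + rewrite IH. destruct (excluded_middle_informative (y = z)) as [Hy|Hy]; auto.
      rewrite indicator_neq by congruence. lia.
    + rewrite chain_cons, IH. destruct (excluded_middle_informative (y = z)) as [->|Hy]; auto.
      rewrite indicator_neq by auto. lia.
Qed.

Lemma length_drop_gen z L : (length (drop_gen z L) <= length L)%nat.
Proof. apply filter_length_le. Qed.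

Lemma gens_in_N_drop_gen z L : gens_in_N L -> gens_in_N (drop_gen z L).
Proof. intros HL x Hx. apply filter_In in Hx. apply HL, Hx. Qed.

(* All terms with generator [z] can be moved to the front and merged, one commutator each. *)
Lemma conj_pow_prod_extract K z L : N z -> gens_in_N L -> exists t L' w c,
  chain_data L' = chain_data (drop_gen z L) /\ (c + length L' = length L)%nat /\ pc w c /\
  conj_pow_prod K L = t ** zpow z (K * chain L z) ** inv t ** conj_pow_prod K L' ** w.
Proof.
  intros Hz. induction L as [|x L IH]; intro HL.
  - exists e, nil, e, 0%nat. repeat split. simpl. rewrite Z.mul_0_r. simpl.
    now rewrite invg1, !mul1g.
  - destruct IH as [t [L' [w [c [Hdata [Hlen [Hw E]]]]]]]; [intros y Hy; apply HL; now right|].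
    destruct x as [g a u]. assert (Hg : N g) by (apply (HL (Term g a u)); now left).
    destruct (excluded_middle_informative (g = z)) as [->|Hgz].
    + set (b := zpow z (K * chain L z)). set (R2 := conj_pow_prod K L').
      assert (HbN : N b) by now apply N_zpow.
      set (d := comm (inv u ** t) b).
      exists u, L', (inv R2 ** (u ** inv b ** d ** b ** inv u) ** R2 ** w), (S c).
      rewrite drop_gen_cons. cbn [gen coef conjugator].
      destruct (excluded_middle_informative (z = z)) as [_|]; [|tauto].
      repeat split; auto; [simpl; lia | |].
      * replace (S c) with (1 + c)%nat by lia. apply prod_comm_mul; auto.
        replace (inv R2 ** (u ** inv b ** d ** b ** inv u) ** R2) with
          (inv R2 ** (u ** inv b ** d ** inv (u ** inv b)) ** inv (inv R2))
          by now rewrite invgK, invMg, invgK, <- !mulgA.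
        now apply prod_comm_conj, prod_comm_conj, prod_comm_comm.
      * simpl conj_pow_prod. rewrite chain_cons, E. cbn [gen coef conjugator]. rewrite indicator_eq.
        replace (K * (a * 1 + chain L z))%Z with (K * a + K * chain L z)%Z by lia.
        rewrite zpowD. fold b R2. unfold conj_pow. simpl. unfold d, Defs.comm.
        rewrite !invMg, !invgK, <- !mulgA. now repeat first [rewrite mulKVg | rewrite mulKg].
    + exists (conj_pow K (Term g a u) ** t), (Term g a u :: L'), w, c.
      rewrite drop_gen_cons. cbn [gen coef conjugator].
      destruct (excluded_middle_informative (g = z)) as [|_]; [tauto|].
      repeat split; auto; [simpl; now f_equal | simpl; lia |].
      simpl conj_pow_prod. rewrite chain_cons, E. cbn [gen coef conjugator].
      rewrite indicator_neq by congruence.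
      replace (a * 0 + chain L z)%Z with (chain L z) by lia.
      now rewrite invMg, <- !mulgA, mulKg.
Qed.

Lemma conj_pow_prod_extract_gen K z L : N z -> gens_in_N L -> exists t L' w c,
  gens_in_N L' /\
  (forall y, chain L' y = if excluded_middle_informative (y = z) then 0%Z else chain L y) /\
  length L' = length (drop_gen z L) /\ (c + length L' = length L)%nat /\ pc w c /\
  conj_pow_prod K L = t ** zpow z (K * chain L z) ** inv t ** conj_pow_prod K L' ** w.
Proof.
  intros Hz HL. destruct (conj_pow_prod_extract K Hz HL) as [t [L' [w [c [Hd [Hlen [Hw E]]]]]]].
  exists t, L', w, c. repeat split; auto.
  - apply (gens_in_N_of_data Hd), gens_in_N_drop_gen, HL.
  - intro y. now rewrite (chain_of_data Hd), chain_drop_gen.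
  - now rewrite <- (length_chain_data L'), Hd, length_chain_data.
Qed.

Lemma prod_comm_null_chain K n : forall L, (length L <= n)%nat -> gens_in_N L ->
  chain L = vzero -> pc (conj_pow_prod K L) (length L).
Proof.
  induction n as [|n IH]; intros L Hlen HL Hc.
  - destruct L; simpl in *; [apply prod_comm_one | lia].
  - destruct L as [|x L0]; [apply prod_comm_one|].
    assert (Hx : N (gen x)) by (apply HL; now left).
    destruct (conj_pow_prod_extract_gen K Hx HL) as [t [L' [w [c [HL' [Hc' [Hd [Hlen' [Hw E]]]]]]]]].
    assert (HL'0 : chain L' = vzero).
    { apply functional_extensionality. intro y. rewrite Hc', Hc.
      now destruct (excluded_middle_informative (y = gen x)). }
    assert (Hlt : (length L' <= n)%nat).
    { rewrite Hd, drop_gen_cons. destruct (excluded_middle_informative (gen x = gen x)); [|tauto].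
      pose proof (length_drop_gen (gen x) L0). simpl in Hlen. lia. }
    rewrite E, Hc. unfold vzero. rewrite Z.mul_0_r. change (zpow (gen x) 0) with e.
    rewrite mulg1, mulgV, mul1g, <- Hlen', Nat.add_comm. apply prod_comm_mul; auto.
Qed.

(* A filling of [n z] at scale [k] exhibits [z^(k n)] as a product of [m + |L|] commutators. *)
Lemma filling_cost_indicator_ge n z r : (1 <= n)%nat -> in_GN z ->
  filling_cost (vscal (Z.of_nat n) (indicator z)) r -> INR n * scl z <= r.
Proof.
  intros Hn Hz [L [k [m [Hk [HL [Hc [Hm Hr]]]]]]].
  destruct (conj_pow_prod_extract_gen (Z.of_nat k) (in_GN_N Hz) HL)
    as [t [L' [w [c [HL' [Hc' [_ [Hlen' [Hw E]]]]]]]]].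
  assert (HL'0 : chain L' = vzero).
  { apply functional_extensionality. intro y. rewrite Hc', Hc. unfold vscal, vzero.
    destruct (excluded_middle_informative (y = z)); auto. rewrite indicator_neq; auto. lia. }
  pose proof (prod_comm_null_chain (Z.of_nat k) (le_n (length L')) HL' HL'0) as HpL'.
  rewrite Hc in E. unfold vscal in E. rewrite indicator_eq, Z.mul_1_r in E.
  replace (Z.of_nat k * Z.of_nat n)%Z with (Z.of_nat (k * n)) in E by lia.
  rewrite zpow_nat in E.
  assert (Hp : pc (z ^+ (k * n)) (m + length L)).
  { replace (z ^+ (k * n)) with (inv t ** (conj_pow_prod (Z.of_nat k) L ** inv w
                                  ** inv (conj_pow_prod (Z.of_nat k) L')) ** inv (inv t)).
    - apply prod_comm_conj. rewrite <- Hlen'.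
      replace (m + (c + length L'))%nat with (m + c + length L')%nat by lia.
      apply prod_comm_mul; [apply prod_comm_mul; auto|]; now apply prod_comm_inv.
    - rewrite E, invgK, <- !mulgA. repeat first [rewrite mulKVg | rewrite mulKg].
      now rewrite mulVg, mulg1. }
  pose proof (scl_le Hz (ltac:(nia) : (1 <= k * n)%nat) Hp) as H.
  assert (0 < INR k) by (apply lt_0_INR; lia). assert (0 < INR n) by (apply lt_0_INR; lia).
  rewrite mult_INR, plus_INR in H.
  eapply Rle_trans; [|exact Hr].
  apply Rmult_le_reg_r with (INR k); auto.
  replace ((INR m + INR (length L)) / INR k * INR k) with (INR m + INR (length L)) by (field; lra).
  apply Rmult_le_compat_r with (r := INR k * INR n) in H; [|nra].
  replace ((INR m + INR (length L)) / (INR k * INR n) * (INR k * INR n))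
    with (INR m + INR (length L)) in H by (field; lra).
  nra.
Qed.

Lemma conj_pow_e K g a : conj_pow K (Term g a e) = zpow g (K * a).
Proof. unfold conj_pow. simpl. now rewrite mul1g, invg1, mulg1. Qed.

Lemma conj_pow_conj K g x a : conj_pow K (Term (g ** x ** inv g) a (inv g)) = zpow x (K * a).
Proof.
  unfold conj_pow. simpl. rewrite zpow_conj, invgK, <- !mulgA, mulKg.
  now rewrite mulgA, mulgKV.
Qed.

Lemma Rle_of_le_plus_div (a b C : R) :
  (forall k : nat, (1 <= k)%nat -> a <= b + C / INR k) -> a <= b.
Proof.
  intro H. destruct (Rle_or_lt a b) as [|Hab]; auto.
  destruct (INR_archimed (a - b) (Rabs C)) as [n Hn]; [lra|].
  specialize (H (S n) ltac:(lia)). rewrite S_INR in H. pose proof (pos_INR n).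
  enough (C / (INR n + 1) < a - b) by lra.
  apply Rmult_lt_reg_r with (INR n + 1); [lra|]. unfold Rdiv.
  rewrite Rmult_assoc, Rinv_l, Rmult_1_r by lra. pose proof (Rle_abs C). nra.
Qed.

Section DominatedFunctional.
Variable F : (T -> Z) -> R.
Hypothesis F_add : forall a b, F (vadd a b) = F a + F b.
Hypothesis F_le : forall a r, filling_cost a r -> F a <= r.

Lemma F_zero : F vzero = 0.
Proof.
  pose proof (F_add vzero vzero) as H.
  replace (vadd vzero vzero) with (@vzero T) in H by vext. lra.
Qed.

Lemma F_zscal a c : F (vscal a c) = IZR a * F c.
Proof.
  assert (Hnat : forall n : nat, F (vscal (Z.of_nat n) c) = INR n * F c).
  { induction n as [|n IH].
    - replace (vscal (Z.of_nat 0) c) with (@vzero T) by vext. rewrite F_zero. simpl. ring.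
    - replace (vscal (Z.of_nat (S n)) c) with (vadd (vscal (Z.of_nat n) c) c) by vext.
      rewrite F_add, IH, S_INR. ring. }
  destruct (Z_le_gt_dec 0 a) as [Ha|Ha].
  - rewrite <- (Z2Nat.id a) by exact Ha. now rewrite Hnat, INR_IZR_INZ.
  - pose proof (F_add (vscal a c) (vscal (Z.of_nat (Z.to_nat (- a))) c)) as H.
    replace (vadd (vscal a c) (vscal (Z.of_nat (Z.to_nat (- a))) c)) with (@vzero T) in H by vext.
    rewrite F_zero, Hnat, INR_IZR_INZ, Z2Nat.id, opp_IZR in H by lia. lra.
Qed.

Definition F_point (x : T) : R := F (indicator x).

Lemma F_chain L :
  F (chain L) = fold_right (fun x acc => IZR (coef x) * F_point (gen x) + acc) 0 L.
Proof. induction L as [|x L IH]; simpl; [apply F_zero | now rewrite F_add, F_zscal, IH]. Qed.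

Lemma F_chain_le L j : gens_in_N L ->
  (forall k, (1 <= k)%nat -> pc (conj_pow_prod (Z.of_nat k) L) (j * k)) ->
  F (chain L) <= INR j.
Proof.
  intros HL Hpc. apply Rle_of_le_plus_div with (INR (length L)). intros k Hk.
  apply F_le. exists L, k, (j * k)%nat. repeat split; auto.
  assert (0 < INR k) by (apply lt_0_INR; lia). rewrite mult_INR. right. field. lra.
Qed.

Lemma F_point_gpow x n : N x -> F_point (x ^+ n) = INR n * F_point x.
Proof.
  intro Hx.
  assert (H1 : F (chain (Term (x ^+ n) 1 e :: Term x (- Z.of_nat n) e :: nil)) <= INR 0).
  { apply F_chain_le.
    - intros y [<-|[<-|[]]]; simpl; auto. now apply N_gpow.
    - intros k _. simpl conj_pow_prod. rewrite !conj_pow_e, mulg1, zpow_gpow, <- zpowD.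
      now replace (Z.of_nat n * (Z.of_nat k * 1) + Z.of_nat k * - Z.of_nat n)%Z with 0%Z by lia. }
  assert (H2 : F (chain (Term x (Z.of_nat n) e :: Term (x ^+ n) (-1) e :: nil)) <= INR 0).
  { apply F_chain_le.
    - intros y [<-|[<-|[]]]; simpl; auto. now apply N_gpow.
    - intros k _. simpl conj_pow_prod. rewrite !conj_pow_e, mulg1, zpow_gpow, <- zpowD.
      now replace (Z.of_nat k * Z.of_nat n + Z.of_nat n * (Z.of_nat k * -1))%Z with 0%Z by lia. }
  rewrite !F_chain in H1, H2. simpl in H1, H2. rewrite opp_IZR, <- INR_IZR_INZ in H1.
  rewrite <- INR_IZR_INZ in H2. lra.
Qed.

Lemma F_point_defect x y : N x -> N y ->
  Rabs (F_point (x ** y) - F_point x - F_point y) <= 1.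
Proof.
  intros Hx Hy.
  assert (H1 : F (chain (Term x 1 e :: Term y 1 e :: Term (x ** y) (-1) e :: nil)) <= INR 1).
  { apply F_chain_le.
    - intros w [<-|[<-|[<-|[]]]]; simpl; auto. now apply N_mul.
    - intros k _. simpl conj_pow_prod. rewrite !conj_pow_e, mulg1, !Z.mul_1_r.
      replace (Z.of_nat k * -1)%Z with (- Z.of_nat k)%Z by lia.
      rewrite zpowN, !zpow_nat, mulgA, Nat.mul_1_l. now apply prod_comm_gpow_mul. }
  assert (H2 : F (chain (Term (x ** y) 1 e :: Term y (-1) e :: Term x (-1) e :: nil)) <= INR 1).
  { apply F_chain_le.
    - intros w [<-|[<-|[<-|[]]]]; simpl; auto. now apply N_mul.
    - intros k _. simpl conj_pow_prod. rewrite !conj_pow_e, mulg1, !Z.mul_1_r.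
      replace (Z.of_nat k * -1)%Z with (- Z.of_nat k)%Z by lia.
      rewrite !zpowN, !zpow_nat, Nat.mul_1_l.
      replace ((x ** y) ^+ k ** (inv (y ^+ k) ** inv (x ^+ k)))
        with (inv (x ^+ k ** y ^+ k ** inv ((x ** y) ^+ k))) by now rewrite !invMg, invgK, mulgA.
      now apply prod_comm_inv, prod_comm_gpow_mul. }
  rewrite !F_chain in H1, H2. simpl in H1, H2. apply Rabs_le. lra.
Qed.

Lemma F_point_conj g x : N x -> F_point (g ** x ** inv g) = F_point x.
Proof.
  intro Hx.
  assert (H1 : F (chain (Term (g ** x ** inv g) 1 (inv g) :: Term x (-1) e :: nil)) <= INR 0).
  { apply F_chain_le.
    - intros w [<-|[<-|[]]]; simpl; auto. now apply N_conj.
    - intros k _. simpl conj_pow_prod. rewrite conj_pow_conj, conj_pow_e, mulg1, <- zpowD.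
      now replace (Z.of_nat k * 1 + Z.of_nat k * -1)%Z with 0%Z by lia. }
  assert (H2 : F (chain (Term x 1 e :: Term (g ** x ** inv g) (-1) (inv g) :: nil)) <= INR 0).
  { apply F_chain_le.
    - intros w [<-|[<-|[]]]; simpl; auto. now apply N_conj.
    - intros k _. simpl conj_pow_prod. rewrite conj_pow_conj, conj_pow_e, mulg1, <- zpowD.
      now replace (Z.of_nat k * 1 + Z.of_nat k * -1)%Z with 0%Z by lia. }
  rewrite !F_chain in H1, H2. simpl in H1, H2. lra.
Qed.

Lemma F_point_Q_inv : is_Q_inv_defect 1 F_point.
Proof.
  repeat split; intros;
    [now apply F_point_gpow | now apply F_point_defect | now apply F_point_conj].
Qed.

End DominatedFunctional.

(* The direction [scl <= sup phi] of Bavard duality, by Hahn-Banach for the filling cost. *)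
Theorem bavard_duality z : in_GN z -> exists phi, is_Q_inv_defect 1 phi /\ scl z <= phi z.
Proof.
  intro Hz.
  destruct (@Z_hahn_banach T filling_cost filling_cost_zero (@filling_cost_ge0 vzero)
              filling_cost_add (fun a r H => ex_intro _ r (filling_cost_opp H))
              (indicator z) (scl z)) as [F [Fadd [Fle Fz]]].
  - exists ((INR (cl z) + INR 1) / INR 1), (Term z 1 e :: nil), 1%nat, (cl z).
    repeat split; auto; [| | |right; reflexivity].
    + intros y [<-|[]]. now apply in_GN_N.
    + apply functional_extensionality. intro y. simpl. unfold vadd, vscal, vzero. lia.
    + simpl conj_pow_prod. rewrite conj_pow_e, mulg1. simpl. rewrite mulg1.
      now apply prod_comm_cl.
  - intros n r Hn Hr. now apply filling_cost_indicator_ge.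
  - exists (F_point F). split; [now apply F_point_Q_inv | exact Fz].
Qed.

(** * A dual basis of [Q(N)^G / H^1(N)^G] *)

(* [F] spans [Q(N)^G] modulo [H^1(N)^G] freely, and its first [k] members
   have dual elements [z 0, ..., z (k-1)] in [[G,N]]. *)
Definition dual_basis_upto (l k : nat) (F : nat -> T -> R) (z : nat -> T) : Prop :=
  (forall i, (i < l)%nat -> Q_inv (F i)) /\
  (forall i j, (i < l)%nat -> (j < k)%nat -> F i (z j) = kronecker i j) /\
  (forall j, (j < k)%nat -> in_GN (z j)) /\
  (forall phi, Q_inv phi -> exists (c : nat -> R) h, H1_inv h /\
     forall x, N x -> phi x = rsum (fun i => c i * F i x) l + h x) /\
  (forall c : nat -> R, (exists h, H1_inv h /\ forall x, N x -> h x = rsum (fun i => c i * F i x) l) ->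
     forall i, (i < l)%nat -> c i = 0).

(* [F k] cannot vanish on [[G,N]], as it would then be a homomorphism. *)
Lemma dual_basis_pivot l k F z : (k < l)%nat -> dual_basis_upto l k F z ->
  exists zk, in_GN zk /\ F k zk <> 0.
Proof.
  intros Hk [HQ [_ [_ [_ Hfree]]]]. apply NNPP. intro Hno.
  assert (Hh : H1_inv (F k)).
  { apply H1_of_Q_vanishing; [now apply HQ|]. intros w Hw. apply NNPP. intro Hne.
    apply Hno. now exists w. }
  assert (H0 : kronecker k k = 0).
  { apply (Hfree (fun i => kronecker i k)); auto. exists (F k). split; auto. intros x _.
    rewrite (rsum_ext (g := fun i => F i x * kronecker i k)) by (intros; apply Rmult_comm).
    now rewrite rsum_kronecker. }
  unfold kronecker in H0. rewrite Nat.eqb_refl in H0. lra.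
Qed.

Lemma dual_basis_upto_step l k F z : (k < l)%nat -> dual_basis_upto l k F z ->
  exists F' z', dual_basis_upto l (S k) F' z'.
Proof.
  intros Hk HI. destruct (dual_basis_pivot Hk HI) as [zk [Hzk Ha]].
  destruct HI as [I1 [I2 [I3 [I4 I5]]]]. remember (F k zk) as a eqn:Ea.
  set (F' := fun i => if Nat.eqb i k then (fun x => F k x / a)
                      else (fun x => F i x + - (F i zk / a) * F k x)).
  set (Tc := fun c : nat -> R => fun i => if Nat.eqb i k then
               (c k - rsum (fun j => if Nat.eqb j k then 0 else c j * F j zk) l) / a else c i).
  assert (Hcoord : forall c x, rsum (fun i => c i * F' i x) l = rsum (fun i => Tc c i * F i x) l).
  { intros c x. unfold F', Tc.
    rewrite <- (rsum_pivot c (fun i => F i x) (fun i => F i zk) Hk Ha).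
    apply rsum_ext. intros i _. now destruct (Nat.eqb i k). }
  exists F', (fun j => if Nat.eqb j k then zk else z j). split; [|split; [|split; [|split]]].
  - intros i Hi. unfold F'. destruct (Nat.eqb i k).
    + replace (fun x => F k x / a) with (fun x => / a * F k x)
        by (apply functional_extensionality; intro; unfold Rdiv; ring).
      now apply Q_inv_scale, I1.
    + apply Q_inv_lincomb; now apply I1.
  - intros i j Hi Hj. unfold F'.
    destruct (Nat.eqb_spec j k) as [Hjk|Hjk]; [subst j|].
    + unfold kronecker.
      destruct (Nat.eqb_spec i k) as [Hik|Hik]; [subst i|]; cbv beta; rewrite <- Ea; field; exact Ha.
    + assert (Hj' : (j < k)%nat) by lia.
      assert (Hkj : F k (z j) = 0).
      { rewrite (I2 k j Hk Hj'). unfold kronecker. destruct (Nat.eqb_spec k j); [lia | auto]. }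
      destruct (Nat.eqb_spec i k) as [Hik|Hik]; [subst i|].
      * rewrite Hkj. unfold kronecker. destruct (Nat.eqb_spec k j); [lia|]. unfold Rdiv. ring.
      * rewrite Hkj, (I2 i j Hi Hj'). ring.
  - intros j Hj. destruct (Nat.eqb_spec j k); auto. apply I3. lia.
  - intros phi Hphi. destruct (I4 phi Hphi) as [c [h [Hh Hc]]].
    set (c' := fun i => if Nat.eqb i k
                        then a * c k + rsum (fun j => if Nat.eqb j k then 0 else c j * F j zk) l
                        else c i).
    exists c', h. split; auto. intros x Hx. rewrite Hc, Hcoord by auto. f_equal.
    apply rsum_ext. intros i Hi. f_equal. unfold Tc, c'. destruct (Nat.eqb_spec i k) as [->|]; auto.
    rewrite Nat.eqb_refl.
    rewrite (rsum_ext
      (f := fun j => if Nat.eqb j k then 0 else (if Nat.eqb j k then _ else c j) * F j zk)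
                      (g := fun j => if Nat.eqb j k then 0 else c j * F j zk))
      by (intros j _; now destruct (Nat.eqb j k)).
    field. exact Ha.
  - intros c [h [Hh Hc]] i Hi.
    assert (HT : forall j, (j < l)%nat -> Tc c j = 0).
    { apply I5. exists h. split; auto. intros x Hx. rewrite Hc by auto. apply Hcoord. }
    assert (Hoff : forall j, (j < l)%nat -> j <> k -> c j = 0).
    { intros j Hj Hjk. pose proof (HT j Hj) as H. unfold Tc in H.
      destruct (Nat.eqb_spec j k); [lia | auto]. }
    destruct (Nat.eqb_spec i k) as [->|Hik]; [|now apply Hoff].
    pose proof (HT k Hk) as H. unfold Tc in H. rewrite Nat.eqb_refl in H.
    rewrite (rsum_ext (g := fun _ => 0)), rsum_const in H.
    2:{ intros j Hj. destruct (Nat.eqb_spec j k); auto. rewrite Hoff; auto. ring. }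
    replace (c k) with ((c k - INR l * 0) / a * a) by (field; exact Ha). rewrite H. ring.
Qed.

Lemma dual_basis_exists l : quot_dim_eq mul inv e N l ->
  exists F z, dual_basis_upto l l F z.
Proof.
  intros [psi [Q1 [Q2 Q3]]].
  enough (H : forall k, (k <= l)%nat -> exists F z, dual_basis_upto l k F z) by now apply H.
  induction k as [|k IH]; intro Hk.
  - exists psi, (fun _ => e). split; [|split; [|split; [|split]]]; auto; intros; lia.
  - destruct (IH ltac:(lia)) as [F [z HI]]. apply (@dual_basis_upto_step l k F z); [lia | exact HI].
Qed.

(** * Coordinates on [[G,N]] *)

Lemma is_Q_inv_defect_uniform (F : nat -> T -> R) n :
  (forall i, (i < n)%nat -> Q_inv (F i)) ->
  exists D, 0 <= D /\ forall i, (i < n)%nat -> is_Q_inv_defect D (F i).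
Proof.
  induction n as [|n IH]; intro HQ.
  - exists 0. split; [lra | intros; lia].
  - destruct IH as [D [HD0 HD]]; [intros i Hi; apply HQ; lia|].
    destruct (is_Q_inv_defect_exists (HQ n ltac:(lia))) as [Dn HDn].
    exists (Rmax D Dn). split; [eapply Rle_trans; [exact HD0 | apply Rmax_l]|].
    intros i Hi. destruct (Nat.eq_dec i n) as [->|Hne].
    + apply is_Q_inv_defect_le with Dn; [exact HDn | apply Rmax_r].
    + apply is_Q_inv_defect_le with D; [apply HD; lia | apply Rmax_l].
Qed.

Fixpoint zprod (z : nat -> T) (v : nat -> Z) (n : nat) : T :=
  match n with O => e | S n => zprod z v n ** zpow (z n) (v n) end.

Section Coordinates.
Variables (l : nat) (F : nat -> T -> R) (z : nat -> T) (D : R).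
Hypothesis HD0 : 0 <= D.
Hypothesis HF : forall i, (i < l)%nat -> is_Q_inv_defect D (F i).
Hypothesis Hdual : forall i j, (i < l)%nat -> (j < l)%nat -> F i (z j) = kronecker i j.
Hypothesis Hz : forall j, (j < l)%nat -> in_GN (z j).
Hypothesis Hspan : forall phi, Q_inv phi -> exists (c : nat -> R) h, H1_inv h /\
  forall x, N x -> phi x = rsum (fun i => c i * F i x) l + h x.

Definition coord_norm (u : T) : R := rsum (fun i => Rabs (F i u)) l.
Definition coord_dist (x y : T) : R := rsum (fun i => Rabs (F i y - F i x)) l.
Definition scl_const : R := 2 * rsum (fun j => scl (z j)) l.

Lemma scl_const_ge0 : 0 <= scl_const.
Proof.
  unfold scl_const. enough (0 <= rsum (fun j => scl (z j)) l) by lra.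
  apply rsum_ge0. intros. now apply scl_ge0, Hz.
Qed.

Lemma coord_norm_le_scl u : in_GN u -> coord_norm u <= INR l * (2 * D * scl u).
Proof.
  intro Hu. unfold coord_norm. rewrite <- rsum_const. apply rsum_le. intros i Hi.
  now apply (qm_scl (HF Hi)).
Qed.

(* Bavard's quasimorphism is a combination of the [F i] plus a homomorphism; the
   coefficients are its values on the dual elements [z j], which [scl (z j)] bounds. *)
Lemma scl_le_coord_norm u : in_GN u -> scl u <= scl_const * coord_norm u.
Proof.
  intro Hu. destruct (bavard_duality Hu) as [phi [Hphi Hsu]].
  destruct (Hspan (is_Q_inv_of_defect Hphi)) as [c [h [Hh Hc]]].
  assert (Hcj : forall j, (j < l)%nat -> c j = phi (z j)).
  { intros j Hj. rewrite Hc, (H1_vanish_GN Hh (Hz Hj)) by now apply in_GN_N, Hz.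
    rewrite (rsum_ext (g := fun i => c i * kronecker i j)) by (intros i Hi; now rewrite Hdual).
    rewrite rsum_kronecker; auto. ring. }
  eapply Rle_trans; [exact Hsu|].
  rewrite Hc, (H1_vanish_GN Hh Hu), Rplus_0_r by now apply in_GN_N.
  eapply Rle_trans; [apply Rle_abs|]. eapply Rle_trans; [apply rsum_abs|].
  unfold coord_norm. rewrite <- rsum_scal. apply rsum_le. intros i Hi.
  rewrite Rabs_mult. apply Rmult_le_compat_r; [apply Rabs_pos|].
  rewrite Hcj by auto. eapply Rle_trans; [apply (qm_scl Hphi (Hz Hi))|].
  unfold scl_const. rewrite Rmult_1_r. apply Rmult_le_compat_l; [lra|].
  apply rsum_term_le with (f := fun j => scl (z j)); auto.
  intros. now apply scl_ge0, Hz.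
Qed.

Lemma coord_norm_dist x y : N x -> N y ->
  Rabs (coord_norm (inv x ** y) - coord_dist x y) <= INR l * D.
Proof.
  intros Hx Hy. apply rsum_dist. intros i Hi.
  pose proof (qm_defect (HF Hi) (N_inv Hx) Hy) as H. rewrite (qm_inv (HF Hi) Hx) in H.
  eapply Rle_trans; [apply Rabs_triang_inv2|].
  now replace (F i (inv x ** y) - (F i y - F i x)) with (F i (inv x ** y) - - F i x - F i y) by ring.
Qed.

Lemma dscl_le_coord_dist x y : in_GN x -> in_GN y ->
  dscl mul inv e N x y <= scl_const * (coord_dist x y + INR l * D).
Proof.
  intros Hx Hy. unfold dscl. eapply Rle_trans; [apply scl_le_coord_norm; now apply in_GN_dist|].
  apply Rmult_le_compat_l; [apply scl_const_ge0|].
  pose proof (coord_norm_dist (in_GN_N Hx) (in_GN_N Hy)) as H. apply Rabs_le_between in H. lra.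
Qed.

Lemma coord_dist_le_dscl x y : in_GN x -> in_GN y ->
  coord_dist x y <= INR l * (2 * D * dscl mul inv e N x y) + INR l * D.
Proof.
  intros Hx Hy. pose proof (coord_norm_dist (in_GN_N Hx) (in_GN_N Hy)) as H.
  apply Rabs_le_between in H. pose proof (coord_norm_le_scl (in_GN_dist Hx Hy)).
  unfold dscl. lra.
Qed.

Lemma in_GN_zprod v n : (n <= l)%nat -> in_GN (zprod z v n).
Proof.
  induction n as [|n IH]; intro Hn; simpl; [apply in_GN_one|].
  apply in_GN_mul; [apply IH; lia | apply in_GN_zpow, Hz; lia].
Qed.

Lemma coord_zprod v n i : (n <= l)%nat -> (i < l)%nat ->
  Rabs (F i (zprod z v n) - rsum (fun j => IZR (v j) * kronecker j i) n) <= INR n * D.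
Proof.
  intros Hn Hi. induction n as [|n IH]; cbn [zprod rsum].
  - rewrite (qm_one (HF Hi)), Rminus_0_r, Rabs_R0. simpl. lra.
  - assert (HzN : N (z n)) by (apply in_GN_N, Hz; lia).
    pose proof (qm_defect (HF Hi) (in_GN_N (in_GN_zprod v (ltac:(lia) : (n <= l)%nat)))
                          (N_zpow (v n) HzN)) as H.
    rewrite (qm_zpow (HF Hi)), Hdual, kronecker_sym in H by (auto; lia).
    specialize (IH ltac:(lia)). rewrite S_INR.
    set (p := zprod z v n) in *.
    replace (F i (p ** zpow (z n) (v n))
             - (rsum (fun j => IZR (v j) * kronecker j i) n + IZR (v n) * kronecker n i))
      with ((F i (p ** zpow (z n) (v n)) - F i p - IZR (v n) * kronecker n i) +
            (F i p - rsum (fun j => IZR (v j) * kronecker j i) n)) by ring.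
    eapply Rle_trans; [apply Rabs_triang | lra].
Qed.

Lemma coord_zprod_close v i : (i < l)%nat -> Rabs (F i (zprod z v l) - IZR (v i)) <= INR l * D.
Proof. intro Hi. rewrite <- (rsum_kronecker (fun j => IZR (v j)) Hi). now apply coord_zprod. Qed.

Definition round_down (r : R) : Z := (up r - 1)%Z.

Lemma round_down_close r : Rabs (IZR (round_down r) - r) <= 1.
Proof. unfold round_down. rewrite minus_IZR. destruct (archimed r). apply Rabs_le. lra. Qed.

Lemma Rabs_dist_close a b a' b' E : Rabs (a - a') <= E -> Rabs (b - b') <= E ->
  Rabs (Rabs (b - a) - Rabs (b' - a')) <= 2 * E.
Proof.
  intros H1 H2. eapply Rle_trans; [apply Rabs_triang_inv2|].
  replace (b - a - (b' - a')) with ((b - b') - (a - a')) by ring.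
  eapply Rle_trans; [apply Rabs_triang | rewrite Rabs_Ropp; lra].
Qed.

Definition sigma_fun (x : T) : nat -> Z := fun i => if Nat.ltb i l then round_down (F i x) else 0%Z.
Lemma sigma_fun_support x i : (l <= i)%nat -> sigma_fun x i = 0%Z.
Proof. intro Hi. unfold sigma_fun. destruct (Nat.ltb_spec i l); [lia | auto]. Qed.

Definition sigma (x : T) : Zl l := exist _ (sigma_fun x) (sigma_fun_support x).
Definition tau (v : Zl l) : T := zprod z (proj1_sig v) l.

Lemma sigma_val x i : (i < l)%nat -> proj1_sig (sigma x) i = round_down (F i x).
Proof. intro Hi. simpl. unfold sigma_fun. destruct (Nat.ltb_spec i l); [auto | lia]. Qed.

Lemma dist1_rsum (v w : Zl l) :
  dist1 v w = rsum (fun i => Rabs (IZR (proj1_sig w i) - IZR (proj1_sig v i))) l.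
Proof. unfold dist1. rewrite zsum_IZR. apply rsum_ext. intros. now rewrite abs_IZR, minus_IZR. Qed.

Lemma Zl_add_val (v w : Zl l) i : proj1_sig (Zl_add v w) i = (proj1_sig v i + proj1_sig w i)%Z.
Proof. reflexivity. Qed.

Lemma dist1_ge0 (v w : Zl l) : 0 <= dist1 v w.
Proof. rewrite dist1_rsum. apply rsum_ge0. intros. apply Rabs_pos. Qed.

Lemma in_GN_tau v : in_GN (tau v).
Proof. now apply in_GN_zprod. Qed.

Lemma dscl_ge0 x y : in_GN x -> in_GN y -> 0 <= dscl mul inv e N x y.
Proof. intros. now apply scl_ge0, in_GN_dist. Qed.

Lemma dist1_sigma_close x y : Rabs (dist1 (sigma x) (sigma y) - coord_dist x y) <= INR l * 2.
Proof.
  rewrite dist1_rsum. apply rsum_dist. intros i Hi. rewrite !sigma_val by auto.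
  replace 2 with (2 * 1) by ring. apply Rabs_dist_close; apply round_down_close.
Qed.

Lemma coord_dist_tau_close v w :
  Rabs (coord_dist (tau v) (tau w) - dist1 v w) <= INR l * (2 * (INR l * D)).
Proof.
  rewrite dist1_rsum. apply rsum_dist. intros i Hi.
  apply Rabs_dist_close; now apply coord_zprod_close.
Qed.

Lemma affine_comparison (s t d M a b E B : R) :
  0 <= M -> 0 <= s -> 0 <= d -> 0 <= a -> 0 <= b -> E + b <= B ->
  s <= M * (t + b) -> t <= a * s + b -> Rabs (d - t) <= E ->
  s <= (M + a + 1) * (d + B) /\ d <= (M + a + 1) * s + B.
Proof.
  intros HM Hs Hd Ha Hb HB Hst Hts Hdt. apply Rabs_le_between in Hdt. split.
  - eapply Rle_trans; [exact Hst|]. assert (0 <= d + B) by (pose proof (Rabs_pos (d - t)); lra).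
    apply Rle_trans with (M * (d + B)); [apply Rmult_le_compat_l; lra | nra].
  - nra.
Qed.

Definition qi_mult : R := scl_const + INR l * (2 * D) + 1.
Definition qi_add : R := INR l * 2 + INR l * D + INR l * (2 * (INR l * D)).

Lemma qi_mult_ge1 : 1 <= qi_mult.
Proof.
  unfold qi_mult. pose proof scl_const_ge0. pose proof (pos_INR l).
  assert (0 <= INR l * (2 * D)) by (apply Rmult_le_pos; lra). lra.
Qed.

Lemma qi_add_ge0 : 0 <= qi_add.
Proof.
  unfold qi_add. pose proof (pos_INR l). assert (0 <= INR l * D) by (apply Rmult_le_pos; lra).
  assert (0 <= INR l * (2 * (INR l * D))) by (apply Rmult_le_pos; lra). lra.
Qed.

Lemma sigma_comparison x y : in_GN x -> in_GN y ->
  dscl mul inv e N x y <= qi_mult * (dist1 (sigma x) (sigma y) + qi_add) /\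
  dist1 (sigma x) (sigma y) <= qi_mult * dscl mul inv e N x y + qi_add.
Proof.
  intros Hx Hy. pose proof (pos_INR l).
  assert (0 <= INR l * D) by (apply Rmult_le_pos; lra).
  assert (0 <= INR l * (2 * D)) by (apply Rmult_le_pos; lra).
  assert (0 <= INR l * (2 * (INR l * D))) by (apply Rmult_le_pos; lra).
  unfold qi_mult. apply affine_comparison with (t := coord_dist x y) (b := INR l * D) (E := INR l * 2).
  - apply scl_const_ge0.
  - now apply dscl_ge0.
  - apply dist1_ge0.
  - lra.
  - lra.
  - unfold qi_add. lra.
  - now apply dscl_le_coord_dist.
  - rewrite Rmult_assoc. now apply coord_dist_le_dscl.
  - apply dist1_sigma_close.
Qed.

Lemma tau_comparison v w :
  dscl mul inv e N (tau v) (tau w) <= qi_mult * (dist1 v w + qi_add) /\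
  dist1 v w <= qi_mult * dscl mul inv e N (tau v) (tau w) + qi_add.
Proof.
  pose proof (pos_INR l).
  assert (0 <= INR l * D) by (apply Rmult_le_pos; lra).
  assert (0 <= INR l * (2 * D)) by (apply Rmult_le_pos; lra).
  assert (0 <= INR l * (2 * (INR l * D))) by (apply Rmult_le_pos; lra).
  unfold qi_mult.
  apply affine_comparison with (t := coord_dist (tau v) (tau w)) (a := INR l * (2 * D)) (b := INR l * D)
    (E := INR l * (2 * (INR l * D))).
  - apply scl_const_ge0.
  - apply dscl_ge0; apply in_GN_tau.
  - apply dist1_ge0.
  - lra.
  - lra.
  - unfold qi_add. lra.
  - apply dscl_le_coord_dist; apply in_GN_tau.
  - rewrite Rmult_assoc. apply coord_dist_le_dscl; apply in_GN_tau.
  - rewrite Rabs_minus_sym. apply coord_dist_tau_close.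
Qed.

Lemma sigma_precoarse x y : in_GN x -> in_GN y ->
  dist1 (sigma (x ** y)) (Zl_add (sigma x) (sigma y)) <= INR l * (D + 3).
Proof.
  intros Hx Hy. rewrite dist1_rsum, <- rsum_const. apply rsum_le. intros i Hi.
  rewrite Zl_add_val, !sigma_val, plus_IZR by auto.
  pose proof (round_down_close (F i x)). pose proof (round_down_close (F i y)).
  pose proof (round_down_close (F i (x ** y))).
  pose proof (qm_defect (HF Hi) (in_GN_N Hx) (in_GN_N Hy)).
  repeat match goal with H : Rabs _ <= _ |- _ => apply Rabs_le_between in H end.
  apply Rabs_le. lra.
Qed.

Lemma tau_precoarse v w :
  dscl mul inv e N (tau (Zl_add v w)) (tau v ** tau w)
  <= scl_const * (INR l * (D + 3 * (INR l * D)) + INR l * D).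
Proof.
  eapply Rle_trans; [apply dscl_le_coord_dist; [apply in_GN_tau | apply in_GN_mul; apply in_GN_tau]|].
  apply Rmult_le_compat_l; [apply scl_const_ge0|]. apply Rplus_le_compat_r.
  unfold coord_dist. rewrite <- rsum_const. apply rsum_le. intros i Hi.
  pose proof (coord_zprod_close (proj1_sig v) Hi). pose proof (coord_zprod_close (proj1_sig w) Hi).
  pose proof (coord_zprod_close (proj1_sig (Zl_add v w)) Hi).
  pose proof (qm_defect (HF Hi) (in_GN_N (in_GN_tau v)) (in_GN_N (in_GN_tau w))).
  unfold tau in *. rewrite Zl_add_val, plus_IZR in *.
  repeat match goal with H : Rabs _ <= _ |- _ => apply Rabs_le_between in H end.
  apply Rabs_le. lra.
Qed.

Lemma coord_tau_sigma_close x i : (i < l)%nat ->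
  Rabs (F i (tau (sigma x)) - F i x) <= 1 + INR l * D.
Proof.
  intro Hi. pose proof (coord_zprod_close (proj1_sig (sigma x)) Hi) as H1.
  pose proof (round_down_close (F i x)) as H2. rewrite sigma_val in H1 by auto.
  unfold tau. apply Rabs_le_between in H1, H2. apply Rabs_le. lra.
Qed.

Lemma tau_sigma_close x : in_GN x ->
  dscl mul inv e N (tau (sigma x)) x <= scl_const * (INR l * (1 + INR l * D) + INR l * D).
Proof.
  intro Hx. eapply Rle_trans; [apply dscl_le_coord_dist; [apply in_GN_tau | exact Hx]|].
  apply Rmult_le_compat_l; [apply scl_const_ge0|]. apply Rplus_le_compat_r.
  unfold coord_dist. rewrite <- rsum_const. apply rsum_le. intros i Hi.
  rewrite Rabs_minus_sym. now apply coord_tau_sigma_close.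
Qed.

Lemma sigma_tau_close v : dist1 (sigma (tau v)) v <= INR l * (1 + INR l * D).
Proof.
  rewrite dist1_rsum, <- rsum_const. apply rsum_le. intros i Hi. rewrite sigma_val by auto.
  pose proof (coord_zprod_close (proj1_sig v) Hi). pose proof (round_down_close (F i (tau v))).
  unfold tau in *. apply Rabs_le_between in H, H0. apply Rabs_le. lra.
Qed.

End Coordinates.

Definition coarse_qi_inverse (l : nat) (sigma : T -> Zl l) (tau : Zl l -> T) : Prop :=
    (forall v, in_GN (tau v)) /\
    (exists D, forall x y, in_GN x -> in_GN y ->
        dist1 (sigma (mul x y)) (Zl_add (sigma x) (sigma y)) <= D) /\
    (exists D, forall v w,
        dscl mul inv e N (tau (Zl_add v w)) (mul (tau v) (tau w)) <= D) /\
    (forall r, exists s, forall x y, in_GN x -> in_GN y ->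
        dscl mul inv e N x y <= r -> dist1 (sigma x) (sigma y) <= s) /\
    (forall r, exists s, forall v w,
        dist1 v w <= r -> dscl mul inv e N (tau v) (tau w) <= s) /\
    (exists D, (forall x, in_GN x -> dscl mul inv e N (tau (sigma x)) x <= D) /\
               (forall v, dist1 (sigma (tau v)) v <= D)) /\
    (exists C1 C2 D1 D2, 0 < C1 /\
       (forall x y, in_GN x -> in_GN y ->
          C1 * dscl mul inv e N x y - D1 <= dist1 (sigma x) (sigma y) /\
          dist1 (sigma x) (sigma y) <= C2 * dscl mul inv e N x y + D2) /\
       (forall v w,
          C1 * dist1 v w - D1 <= dscl mul inv e N (tau v) (tau w) /\
          dscl mul inv e N (tau v) (tau w) <= C2 * dist1 v w + D2)).

Lemma affine_qi (s d K B : R) : 1 <= K -> 0 <= B -> 0 <= s -> 0 <= d ->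
  s <= K * (d + B) -> d <= K * s + B ->
  / K * s - B <= d /\ d <= K * s + K * B /\ / K * d - B <= s /\ s <= K * d + K * B.
Proof.
  intros HK HB Hs Hd Hsd Hds.
  assert (HK' : 0 < / K <= 1).
  { split; [apply Rinv_0_lt_compat; lra | rewrite <- Rinv_1; apply Rinv_le_contravar; lra]. }
  assert (Hinv : / K * K = 1) by (field; lra).
  repeat split; nra.
Qed.

Lemma coarse_qi_inverse_of_dual_basis l F z : dual_basis_upto l l F z ->
  coarse_qi_inverse (sigma l F) (tau z).
Proof.
  intros [HQ [Hdual [Hz [Hspan _]]]].
  destruct (is_Q_inv_defect_uniform HQ) as [D [HD0 HF]].
  pose proof (qi_mult_ge1 HD0 Hz) as HK. pose proof (qi_add_ge0 l HD0) as HB.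
  set (K := qi_mult l z D) in *. set (B := qi_add l D) in *.
  assert (Hsig : forall x y, in_GN x -> in_GN y ->
    dscl mul inv e N x y <= K * (dist1 (sigma l F x) (sigma l F y) + B) /\
    dist1 (sigma l F x) (sigma l F y) <= K * dscl mul inv e N x y + B)
    by (intros; eapply sigma_comparison; eauto).
  assert (Htau : forall v w,
    dscl mul inv e N (tau z v) (tau z w) <= K * (dist1 v w + B) /\
    dist1 v w <= K * dscl mul inv e N (tau z v) (tau z w) + B)
    by (intros; eapply tau_comparison; eauto).
  assert (HtauGN : forall v, in_GN (tau (l := l) z v)) by (intro; now apply in_GN_tau).
  split; [|split; [|split; [|split; [|split; [|split]]]]].
  - exact HtauGN.
  - eexists. intros x y Hx Hy. eapply sigma_precoarse; eauto.
  - eexists. intros v w. eapply tau_precoarse; eauto.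
  - intro r. exists (K * r + B). intros x y Hx Hy Hr.
    eapply Rle_trans; [apply Hsig; auto|]. apply Rplus_le_compat_r, Rmult_le_compat_l; lra.
  - intro r. exists (K * (r + B)). intros v w Hr.
    eapply Rle_trans; [apply Htau|]. apply Rmult_le_compat_l; lra.
  - exists (Rmax (scl_const l z * (INR l * (1 + INR l * D) + INR l * D)) (INR l * (1 + INR l * D))).
    split.
    + intros x Hx. eapply Rle_trans; [eapply tau_sigma_close; eauto | apply Rmax_l].
    + intro v. eapply Rle_trans; [eapply sigma_tau_close; eauto | apply Rmax_r].
  - exists (/ K), K, B, (K * B). split; [apply Rinv_0_lt_compat; lra|]. split.
    + intros x y Hx Hy. destruct (Hsig x y Hx Hy) as [H1 H2].
      destruct (affine_qi HK HB (dscl_ge0 Hx Hy) (dist1_ge0 _ _) H1 H2) as [? [? _]]. now split.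
    + intros v w. destruct (Htau v w) as [H1 H2].
      destruct (affine_qi HK HB (dscl_ge0 (HtauGN v) (HtauGN w)) (dist1_ge0 _ _) H1 H2)
        as [_ [_ [? ?]]]. now split.
Qed.

End NormalSubgroup.
End Group.

Theorem proposition1p1 (T : Type) (mul : T -> T -> T) (inv : T -> T) (e : T)
  (HG : is_group mul inv e) (N : T -> Prop)
  (HN : is_normal_subgroup mul inv e N) (l : nat)
  (Hdim : quot_dim_eq mul inv e N l) :
  exists (sigma : T -> Zl l) (tau : Zl l -> T),
    (* tau takes values in [G,N] *)
    (forall v, in_GN mul inv e N (tau v)) /\
    (* sigma and tau are pre-coarse homomorphisms *)
    (exists D, forall x y, in_GN mul inv e N x -> in_GN mul inv e N y ->
        dist1 (sigma (mul x y)) (Zl_add (sigma x) (sigma y)) <= D) /\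
    (exists D, forall v w,
        dscl mul inv e N (tau (Zl_add v w)) (mul (tau v) (tau w)) <= D) /\
    (* sigma and tau are controlled *)
    (forall r, exists s, forall x y, in_GN mul inv e N x -> in_GN mul inv e N y ->
        dscl mul inv e N x y <= r -> dist1 (sigma x) (sigma y) <= s) /\
    (forall r, exists s, forall v w,
        dist1 v w <= r -> dscl mul inv e N (tau v) (tau w) <= s) /\
    (* sigma and tau are coarse inverse to each other *)
    (exists D, (forall x, in_GN mul inv e N x ->
                   dscl mul inv e N (tau (sigma x)) x <= D) /\
               (forall v, dist1 (sigma (tau v)) v <= D)) /\
    (* the coarse isomorphism is a quasi-isometry *)
    (exists C1 C2 D1 D2, 0 < C1 /\
       (forall x y, in_GN mul inv e N x -> in_GN mul inv e N y ->
          C1 * dscl mul inv e N x y - D1 <= dist1 (sigma x) (sigma y) /\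
          dist1 (sigma x) (sigma y) <= C2 * dscl mul inv e N x y + D2) /\
       (forall v w,
          C1 * dist1 v w - D1 <= dscl mul inv e N (tau v) (tau w) /\
          dscl mul inv e N (tau v) (tau w) <= C2 * dist1 v w + D2)).
Proof.
  destruct (dual_basis_exists HG HN Hdim) as [F [z Hbasis]].
  exists (sigma l F), (tau mul inv e z).
  exact (coarse_qi_inverse_of_dual_basis HG HN Hbasis).
Qed.
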